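(* Let $\gamma$ be a regular periodic orbit of the regularized planar two-center problem, lying on a regular torus $\mathbb{T}$ with rotation number $W$; write $W=p/q$ with $p,q$ coprime positive integers. Then the periodic syzygy sequence of $\gamma$ is of the following form, according to the type of $\mathbb{T}$: (L) $1\,3^{n_1}\,2\,3^{n_2}\,1\,3^{n_3}\,2\cdots 3^{n_s}$ (the symbols 1 and 2 alternate, separated by blocks of 3's); (S) $1\,3^{n_1}\,1\,3^{n_2}\,1\,3^{n_3}\,1\cdots 3^{n_s}$ or $2\,3^{n_1}\,2\,3^{n_2}\,2\,3^{n_3}\cdots 2\,3^{n_s}$; (P) $(12)^q$; where in cases L and S the exponents $n_i$ are those of the Sturmian word of the rational number $W$. In the cases L and S the length of the syzygy word recorded over one period of $\gamma$ on $\mathbb{T}$ is $2(p+q)$.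
   Context: Fix $d>0$ and masses $m_1,m_2>0$ at the points $(-d,0)$ and $(d,0)$ of the plane. A test particle moves with Hamiltonian $H=\tfrac12(p_x^2+p_y^2)-m_1/\sqrt{(x+d)^2+y^2}-m_2/\sqrt{(x-d)^2+y^2}$; only energies $h<0$ are considered. Regularization: introduce $(\lambda,\nu)\in\mathbb{R}\times(\mathbb{R}/2\pi\mathbb{Z})$ by $x+iy=d\sin(\nu+i\lambda)$, i.e. $(x,y)=(d\cosh\lambda\sin\nu,\ d\sinh\lambda\cos\nu)$ (a double cover of the plane branched over the two centers, which correspond to $(\lambda,\nu)=(0,\pm\pi/2)$), with conjugate momenta $p_\lambda,p_\nu$, and the time change $dt=d^2(\cosh^2\lambda-\sin^2\nu)\,d\tau$. On the energy level $H=h$ the motion becomes (in time $\tau$) the flow of $H_\lambda(\lambda,p_\lambda)+H_\nu(\nu,p_\nu)$ on its zero level, where $H_\lambda=\tfrac12p_\lambda^2-d(m_1+m_2)\cosh\lambda-hd^2\cosh^2\lambda$ and $H_\nu=\tfrac12p_\nu^2+d(m_1-m_2)\sin\nu+hd^2\sin^2\nu$; each orbit lies in a set $\{H_\lambda=-g,\ H_\nu=g\}$, $g$ being a separation constant (the value of Euler's second integral). Regular torus: a compact connected component $\mathbb{T}=C_\lambda\times C_\nu$ of such a set, where $-g$ is a regular value of $H_\lambda$ and $g$ a regular value of $H_\nu$; here $C_\lambda$ is a closed curve in the $(\lambda,p_\lambda)$-plane and $C_\nu$ a closed curve in the cylinder $(\nu,p_\nu)\in(\mathbb{R}/2\pi\mathbb{Z})\times\mathbb{R}$.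 Every regular torus is of one of three types: S (satellite) if $C_\nu$ is contractible in the cylinder; L (lemniscate) if $C_\nu$ winds around the cylinder and $C_\lambda$ meets $\{\lambda=0\}$; P (planetary) if $C_\nu$ winds around the cylinder and $C_\lambda$ does not meet $\{\lambda=0\}$. Rotation number: if $T_\lambda,T_\nu$ are the $\tau$-periods of the one-degree-of-freedom motions on $C_\lambda$ and $C_\nu$, then $W=T_\nu/T_\lambda>0$. With angles $\theta_1\in\mathbb{R}/\mathbb{Z}$ along $C_\nu$ and $\theta_2\in\mathbb{R}/\mathbb{Z}$ along $C_\lambda$, each increasing uniformly in $\tau$ with period 1, the flow on $\mathbb{T}$ is linear with lifts $\theta_2=W\theta_1+\mathrm{const}$. Syzygies: the particle is on the $x$-axis iff $\lambda=0$ or $\nu\equiv\pm\pi/2$. Record symbol 3 when $\lambda=0$, $\nu\not\equiv\pm\pi/2$ (particle strictly between the centers), symbol 1 when $\nu\equiv-\pi/2$, $\lambda\neq0$ (particle on $x<-d$), symbol 2 when $\nu\equiv\pi/2$, $\lambda\ne0$ (particle on $x>d$). Collision points are those with $\lambda=0$, $\nu\equiv\pm\pi/2$. A regular periodic orbit is a periodic orbit of the regularized flow on a regular torus that contains no collision point; its periodic syzygy sequence is the cyclic word of symbols recorded in time order over one period. Sturmian word: for $m>0$ and $y_0$ with the line $y=mx+y_0$ avoiding $\mathbb{Z}^2$, put $y_k=y_0+km$ and $n_k=\lfloor m\rfloor$ if $\{y_{k-1}\}+\{m\}<1$, $n_k=\lfloor m\rfloor+1$ if $\{y_{k-1}\}+\{m\}>1$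 ($\lfloor\cdot\rfloor$ floor, $\{\cdot\}$ fractional part). For rational $m$ the resulting periodic sequence $(n_k)$, up to index shift, does not depend on $y_0$; it is the Sturmian word of $m$. *)

From Stdlib Require Import Reals Lra List ZArith Arith.
Open Scope R_scope.

Definition H_lam (d m1 m2 h : R) (l p : R) : R :=
  p ^ 2 / 2 - d * (m1 + m2) * cosh l - h * d ^ 2 * (cosh l) ^ 2.

Definition dH_lam (d m1 m2 h : R) (l : R) : R :=
  - d * (m1 + m2) * sinh l - 2 * h * d ^ 2 * cosh l * sinh l.

Definition H_nu (d m1 m2 h : R) (n p : R) : R :=
  p ^ 2 / 2 + d * (m1 - m2) * sin n + h * d ^ 2 * (sin n) ^ 2.

Definition dH_nu (d m1 m2 h : R) (n : R) : R :=
  d * (m1 - m2) * cos n + 2 * h * d ^ 2 * sin n * cos n.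

(** [c] is a regular value of a one-degree-of-freedom Hamiltonian
    H(x,p) = p^2/2 + V(x) with dH/dx = dHx : the gradient (dHx x, p)
    does not vanish at any point of the level set {H = c}. *)
Definition regular_value (H : R -> R -> R) (dHx : R -> R) (c : R) : Prop :=
  forall x p, H x p = c -> dHx x <> 0 \/ p <> 0.

(** A solution of the regularized flow (in time tau) of H_lambda + H_nu,
    with nu lifted continuously to R (nu is an angle mod 2 pi). *)
Definition is_reg_solution (d m1 m2 h : R)
    (lam plam nu pnu : R -> R) : Prop :=
  forall tau,
    derivable_pt_lim lam tau (plam tau) /\
    derivable_pt_lim plam tau (- dH_lam d m1 m2 h (lam tau)) /\
    derivable_pt_lim nu tau (pnu tau) /\
    derivable_pt_lim pnu tau (- dH_nu d m1 m2 h (nu tau)).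

Definition eqmod2pi (a b : R) : Prop := exists k : Z, a = b + 2 * PI * IZR k.

Definition min_period (per : R -> Prop) (T : R) : Prop :=
  0 < T /\ per T /\ forall T', 0 < T' < T -> ~ per T'.

Definition state_per (lam plam nu pnu : R -> R) (T : R) : Prop :=
  forall tau, lam (tau + T) = lam tau /\ plam (tau + T) = plam tau /\
              eqmod2pi (nu (tau + T)) (nu tau) /\ pnu (tau + T) = pnu tau.

Definition lam_per (lam plam : R -> R) (T : R) : Prop :=
  forall tau, lam (tau + T) = lam tau /\ plam (tau + T) = plam tau.

Definition nu_per (nu pnu : R -> R) (T : R) : Prop :=
  forall tau, eqmod2pi (nu (tau + T)) (nu tau) /\ pnu (tau + T) = pnu tau.

(** Types of the torus.  C_nu is traced once by nu over one period Tnu;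
    its winding number around the cylinder is (nu(Tnu) - nu(0)) / (2 pi).
    C_nu is contractible iff this winding number is 0. *)
Definition type_S (nu : R -> R) (Tnu : R) : Prop := nu Tnu = nu 0.
Definition type_L (lam nu : R -> R) (Tnu : R) : Prop :=
  nu Tnu <> nu 0 /\ exists tau, lam tau = 0.
Definition type_P (lam nu : R -> R) (Tnu : R) : Prop :=
  nu Tnu <> nu 0 /\ forall tau, lam tau <> 0.

(** collision: lambda = 0 and nu = +-pi/2 mod 2pi (i.e. cos nu = 0) *)
Definition collision_free (lam nu : R -> R) : Prop :=
  forall tau, ~ (lam tau = 0 /\ cos (nu tau) = 0).

(** Syzygies: the particle is on the x-axis iff lambda = 0 or nu = +-pi/2. *)
Definition is_syzygy (lam nu : R -> R) (tau : R) : Prop :=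
  lam tau = 0 \/ cos (nu tau) = 0.

Definition syz_symbol (lam nu : R -> R) (tau : R) (s : nat) : Prop :=
  (s = 3%nat /\ lam tau = 0 /\ cos (nu tau) <> 0) \/
  (s = 1%nat /\ sin (nu tau) = -1 /\ lam tau <> 0) \/
  (s = 2%nat /\ sin (nu tau) = 1 /\ lam tau <> 0).

Definition syzygy_word (lam nu : R -> R) (T : R) (w : list nat) : Prop :=
  exists ts : list R,
    length ts = length w /\
    (forall i, (S i < length ts)%nat -> nth i ts 0 < nth (S i) ts 0) /\
    (forall tau, In tau ts -> 0 <= tau < T) /\
    (forall tau, 0 <= tau < T -> is_syzygy lam nu tau -> In tau ts) /\
    (forall i, (i < length w)%nat -> syz_symbol lam nu (nth i ts 0) (nth i w 0%nat)).

Definition rotate {A : Type} (k : nat) (w : list A) : list A :=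
  skipn k w ++ firstn k w.

Definition block (a n : nat) : list nat := a :: repeat 3%nat n.

Definition L_word (ns : list nat) : list nat :=
  concat (map (fun i => block (if Nat.even i then 1%nat else 2%nat) (nth i ns 0%nat))
              (seq 0 (length ns))).

Definition S_word (a : nat) (ns : list nat) : list nat := concat (map (block a) ns).

Definition P_word (q : nat) : list nat := concat (repeat (1%nat :: 2%nat :: nil) q).

(** Sturmian word of slope m (floor = Int_part, fractional part = frac_part):
    ns = (n_1, ..., n_s) consists of consecutive terms of the Sturmian
    sequence of the line y = m x + y0 for some y0 with the line avoiding Z^2
    (the choice of y0 also accounts for an arbitrary index shift). *)
Definition sturmian_exponents (m : R) (ns : list nat) : Prop :=
  exists y0 : R,
    (forall x y : Z, m * IZR x + y0 <> IZR y) /\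
    forall i, (i < length ns)%nat ->
      let yprev := y0 + INR i * m in
      (frac_part yprev + frac_part m < 1 /\
         Z.of_nat (nth i ns 0%nat) = Int_part m) \/
      (frac_part yprev + frac_part m > 1 /\
         Z.of_nat (nth i ns 0%nat) = (Int_part m + 1)%Z).

(* The regularized motion splits into the two one-degree-of-freedom motions x'' = F(x) in lambda
   and in nu, and the syzygies are the zeros of lambda together with the crossings of
   nu = +-pi/2.  Conservation of energy and uniqueness of solutions turn symmetries of the
   potentials into symmetries of the orbit: lambda -> -lambda shows that the zeros of lambda
   form an arithmetic progression of step T_lambda/2, and the reflections of nu about the
   crossing values compose to time translations, so the crossings form a progression of step
   T_nu/2, alternately at -pi/2 and pi/2 when nu rotates (L, P) and always at the same value
   when nu oscillates (S; concavity of the nu-potential in sin nu forces a crossing, and the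
   level of nu's turning points forces lambda to vanish).  Over the period T = q T_nu = p T_lambda
   there are 2q crossings and 2p zeros, and the numbers of zeros between consecutive crossings
   are floor((j + 1) W - e) - floor(j W - e) for W = p/q: the Sturmian word of W. *)

From Stdlib Require Import Reals Lra Lia List ZArith Arith Sorting.
Open Scope R_scope.

Local Notation dl := derivable_pt_lim.

Lemma dl_eq f x a b : dl f x a -> a = b -> dl f x b.
Proof. now intros H <-. Qed.

Lemma dl_cmul c f x a : dl f x a -> dl (fun t => c * f t) x (c * a).
Proof. exact (derivable_pt_lim_scal f c x a). Qed.

Lemma dl_shift f x a c : dl f (x + c) a -> dl (fun t => f (t + c)) x a.
Proof.
  intros H. apply dl_eq with (a * (1 + 0)); [|ring].
  apply (derivable_pt_lim_comp (fun t => t + c) f); [|exact H].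
  apply derivable_pt_lim_plus; [apply derivable_pt_lim_id|apply derivable_pt_lim_const].
Qed.

Lemma dl_reflect f x a c : dl f (c - x) a -> dl (fun t => f (c - t)) x (- a).
Proof.
  intros H. apply dl_eq with (a * (0 - 1)); [|ring].
  apply (derivable_pt_lim_comp (fun t => c - t) f); [|exact H].
  apply derivable_pt_lim_minus; [apply derivable_pt_lim_const|apply derivable_pt_lim_id].
Qed.

Lemma dl_continuity_pt f x a : dl f x a -> continuity_pt f x.
Proof. intros H. apply derivable_continuous_pt. now exists a. Qed.

Lemma Rabs_le_inv x a : Rabs x <= a -> - a <= x <= a.
Proof. intros H. pose proof (Rle_abs x). pose proof (Rle_abs (- x)). rewrite Rabs_Ropp in *. lra. Qed.

Lemma sign_witness P : P <> 0 -> exists s, s * s = 1 /\ 0 < s * P.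
Proof. intros HP. destruct (Rdichotomy _ _ HP); [exists (-1)|exists 1]; split; lra. Qed.

Lemma deriv_nonpos_nonincreasing f f' : (forall t, dl f t (f' t)) -> (forall t, f' t <= 0) ->
  forall a b, a <= b -> f b <= f a.
Proof.
  intros Hd Hs a b [Hab|<-]; [|lra].
  destruct (MVT_cor2 f f' a b Hab (fun c _ => Hd c)) as [c [E _]].
  specialize (Hs c). nra.
Qed.

Lemma deriv_pos_increasing f f' a b : (forall t, dl f t (f' t)) ->
  (forall t, a < t < b -> 0 < f' t) -> forall u v, a <= u -> u < v -> v <= b -> f u < f v.
Proof.
  intros Hd Hs u v Hu Huv Hv.
  destruct (MVT_cor2 f f' u v Huv (fun c _ => Hd c)) as [c [E Hc]].
  specialize (Hs c ltac:(lra)). nra.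
Qed.

Lemma deriv0_constant f : (forall t, dl f t 0) -> forall a b, f a = f b.
Proof.
  intros Hd.
  assert (H : forall a b, a <= b -> f b <= f a) by
    exact (deriv_nonpos_nonincreasing f (fun _ => 0) Hd (fun _ => Rle_refl 0)).
  assert (H' : forall a b, a <= b -> - f b <= - f a).
  { apply (deriv_nonpos_nonincreasing _ (fun _ => - 0)); [|intros; lra].
    intro t. now apply derivable_pt_lim_opp. }
  intros a b. destruct (Rle_dec a b) as [Hab|Hab].
  - specialize (H a b Hab); specialize (H' a b Hab); lra.
  - specialize (H b a ltac:(lra)); specialize (H' b a ltac:(lra)); lra.
Qed.

Lemma deriv_of_constant f c t l : (forall s, f s = c) -> dl f t l -> l = 0.
Proof.
  intros E H. apply (uniqueness_limite f t); [exact H|].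
  apply (derivable_pt_lim_ext (fun _ => c)); [auto|apply derivable_pt_lim_const].
Qed.

Lemma deriv_zero_at_max f l tM : dl f tM l -> (forall t, f t <= f tM) -> l = 0.
Proof.
  intros H Hm. assert (pr : derivable_pt f tM) by (exists l; exact H).
  rewrite <- (derive_pt_eq_0 f tM l pr H).
  apply (deriv_maximum f (tM - 1) (tM + 1)); intros; auto; lra.
Qed.

Lemma deriv_zero_at_min f l tm : dl f tm l -> (forall t, f tm <= f t) -> l = 0.
Proof.
  intros H Hm. assert (pr : derivable_pt f tm) by (exists l; exact H).
  rewrite <- (derive_pt_eq_0 f tm l pr H).
  apply (deriv_minimum f (tm - 1) (tm + 1)); intros; auto; lra.
Qed.

Lemma sign_near_simple_zero f t P : dl f t P -> f t = 0 -> P <> 0 ->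
  exists eps, 0 < eps /\ forall u, 0 < u < eps -> f (t + u) * P > 0 /\ f (t - u) * P < 0.
Proof.
  intros H Ht HP.
  assert (Ha : 0 < Rabs P / 2) by (apply Rabs_pos_lt in HP; lra).
  destruct (H _ Ha) as [d Hd]. exists d. split; [apply cond_pos|].
  assert (Hq : forall u, u <> 0 -> Rabs u < d -> f (t + u) / u * P > 0).
  { intros u Hu0 Hu. specialize (Hd u Hu0 Hu). rewrite Ht, Rminus_0_r in Hd.
    apply Rabs_def2 in Hd. destruct (Rdichotomy P 0 HP) as [Hn|Hn].
    - rewrite Rabs_left in Hd by lra. nra.
    - rewrite Rabs_right in Hd by lra. nra. }
  intros u Hu. split.
  - specialize (Hq u ltac:(lra) ltac:(rewrite Rabs_right; lra)).
    replace (f (t + u) / u * P) with (f (t + u) * P * / u) in Hq by (field; lra).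
    assert (0 < / u) by (apply Rinv_0_lt_compat; lra). nra.
  - specialize (Hq (- u) ltac:(lra) ltac:(rewrite Rabs_left; lra)).
    replace (t + - u) with (t - u) in Hq by ring.
    replace (f (t - u) / - u * P) with (- (f (t - u) * P * / u)) in Hq by (field; lra).
    assert (0 < / u) by (apply Rinv_0_lt_compat; lra). nra.
Qed.

Lemma IVT_opp_signs f a b : (forall t, continuity_pt f t) -> a < b -> f a * f b < 0 ->
  exists c, a < c < b /\ f c = 0.
Proof.
  intros Hc Hab Hs.
  assert (Hsgn : (f a < 0 < f b) \/ (- f a < 0 < - f b)).
  { assert (f a <> 0) by (intro E; rewrite E in Hs; lra).
    destruct (Rdichotomy _ _ H); [left|right]; split; nra. }
  destruct Hsgn as [[Ha Hb]|[Ha Hb]].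
  - destruct (IVT f a b Hc Hab Ha Hb) as [c [Hc1 Hc2]].
    exists c. split; [|exact Hc2].
    destruct Hc1 as [[?|?] [?|?]]; subst; split; lra.
  - destruct (IVT (fun t => - f t) a b (fun t => continuity_pt_opp f t (Hc t)) Hab Ha Hb)
      as [c [Hc1 Hc2]].
    exists c. split; [|lra].
    destruct Hc1 as [[?|?] [?|?]]; subst; split; lra.
Qed.

Lemma IVT_between f a b y : (forall t, continuity_pt f t) -> a <= b ->
  Rmin (f a) (f b) <= y <= Rmax (f a) (f b) -> exists c, a <= c <= b /\ f c = y.
Proof.
  intros Hc Hab Hy.
  destruct (Req_dec (f a) y) as [E|E]; [exists a; split; [lra|auto]|].
  destruct (Req_dec (f b) y) as [E'|E']; [exists b; split; [lra|auto]|].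
  destruct (Rle_lt_or_eq_dec _ _ Hab) as [Hlt|<-];
    [|unfold Rmin, Rmax in Hy; destruct Rle_dec; lra].
  destruct (IVT_opp_signs (fun t => f t - y) a b) as [c [Hc1 Hc2]]; auto.
  - intro t. apply continuity_pt_minus; [auto|apply continuity_pt_const; now intros u v].
  - unfold Rmin, Rmax in Hy; destruct (Rle_dec (f a) (f b)).
    + assert (f a < y < f b) by lra. nra.
    + assert (f b < y < f a) by lra. nra.
  - exists c; split; lra.
Qed.

Lemma same_sign_of_no_zero f a b : (forall t, continuity_pt f t) -> a <= b ->
  (forall t, a <= t <= b -> f t <> 0) -> 0 < f a * f b.
Proof.
  intros Hc Hab Hn.
  assert (Ha := Hn a ltac:(lra)). assert (Hb := Hn b ltac:(lra)).
  destruct (Rlt_dec 0 (f a * f b)) as [|Hs]; [assumption|exfalso].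
  assert (Hneg : f a * f b < 0).
  { destruct (Rdichotomy _ _ (Rmult_integral_contrapositive_currified _ _ Ha Hb)); lra. }
  destruct (Rle_lt_or_eq_dec _ _ Hab) as [Hlt|<-]; [|nra].
  destruct (IVT_opp_signs f a b Hc Hlt Hneg) as [c [Hc1 Hc2]].
  exact (Hn c ltac:(lra) Hc2).
Qed.

Lemma continuous_nonvanishing_sign f : (forall t, continuity_pt f t) -> (forall t, f t <> 0) ->
  (forall t, 0 < f t) \/ (forall t, f t < 0).
Proof.
  intros Hc Hn.
  assert (K : forall t, 0 < f 0 * f t).
  { intro t. destruct (Rle_dec 0 t).
    - apply same_sign_of_no_zero; auto.
    - rewrite Rmult_comm. apply same_sign_of_no_zero; auto; lra. }
  destruct (Rdichotomy _ _ (Hn 0)) as [H0|H0];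
    [right|left]; intro t; specialize (K t); nra.
Qed.

Lemma first_zero f a b : (forall t, continuity_pt f t) -> a < b -> f a <> 0 -> f b = 0 ->
  exists t, a < t <= b /\ f t = 0 /\ forall s, a <= s < t -> f s <> 0.
Proof.
  intros Hc Hab Ha Hb.
  set (E := fun s => a <= s <= b /\ f s = 0).
  assert (Hbd : bound (fun s => E (- s))) by (exists (- a); intros s [H1 H2]; lra).
  assert (Hne : exists s, E (- s)) by
    (exists (- b); unfold E; rewrite Ropp_involutive; split; [lra|auto]).
  destruct (completeness _ Hbd Hne) as [m [Hub Hlub]].
  assert (Hm1 : m <= - a) by (apply Hlub; intros s [H1 H2]; lra).
  assert (Hm2 : - b <= m) by (apply Hub; unfold E; rewrite Ropp_involutive; split; [lra|auto]).
  assert (Hft : f (- m) = 0).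
  { destruct (Req_dec (f (- m)) 0) as [|Hn]; [assumption|exfalso].
    destruct (Hc (- m) (Rabs (f (- m))) (Rabs_pos_lt _ Hn)) as [d [Hd Hd2]].
    assert (Hex : exists s, E (- s) /\ m - d < s).
    { apply Classical_Prop.NNPP. intro H. assert (m <= m - d) by
        (apply Hlub; intros s Hs; destruct (Rle_dec s (m - d)); auto;
         exfalso; apply H; exists s; split; auto; lra).
      lra. }
    destruct Hex as [s [[Hs1 Hs2] Hs3]].
    assert (s <= m) by (apply Hub; split; auto).
    destruct (Req_dec (- s) (- m)) as [Heq|Hneq]; [rewrite Heq in Hs2; contradiction|].
    assert (Rabs (f (- s) - f (- m)) < Rabs (f (- m))).
    { apply Hd2. split; [split; [exact I|auto]|]. simpl. unfold R_dist. rewrite Rabs_right; lra. }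
    rewrite Hs2, Rminus_0_l, Rabs_Ropp in H0. lra. }
  exists (- m). split; [split|split]; auto; try lra.
  - destruct (Req_dec a (- m)) as [E'|]; [rewrite <- E' in Hft; contradiction|lra].
  - intros s [Hs1 Hs2] Hfs.
    assert (- s <= m) by (apply Hub; unfold E; rewrite Ropp_involutive; split; [lra|auto]).
    lra.
Qed.

Lemma R_euclid_div tau x : 0 < tau -> exists j r, 0 <= r < tau /\ x = r + IZR j * tau.
Proof.
  intros Ht. destruct (base_Int_part (x / tau)) as [A B].
  exists (Int_part (x / tau)), (x - IZR (Int_part (x / tau)) * tau). split; [|ring].
  assert (x = (x / tau) * tau) by (field; lra). split; nra.
Qed.

Lemma Zshift_iff (P : R -> Prop) tau : (forall s, P (s + tau) <-> P s) ->
  forall j s, P (s + IZR j * tau) <-> P s.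
Proof.
  intros H j. induction j using Z.peano_ind; intro s.
  - rewrite Rmult_0_l, Rplus_0_r. tauto.
  - rewrite succ_IZR. replace (s + (IZR j + 1) * tau) with ((s + IZR j * tau) + tau) by ring.
    rewrite H. apply IHj.
  - rewrite <- Z.sub_1_r, minus_IZR, <- (H (s + (IZR j - 1) * tau)).
    replace (s + (IZR j - 1) * tau + tau) with (s + IZR j * tau) by ring. apply IHj.
Qed.

Lemma Zshift_eq (f : R -> R) tau : (forall s, f (s + tau) = f s) ->
  forall j s, f (s + IZR j * tau) = f s.
Proof.
  intros H j s. apply (Zshift_iff (fun u => f u = f s) tau); [|reflexivity].
  intro u. rewrite H. tauto.
Qed.

Lemma periodic_max f T0 : 0 < T0 -> (forall t, continuity_pt f t) -> (forall t, f (t + T0) = f t) ->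
  exists tM, forall t, f t <= f tM.
Proof.
  intros HT Hc Hp. destruct (continuity_ab_maj f 0 T0 ltac:(lra) (fun c _ => Hc c)) as [M [HM _]].
  exists M. intro t. destruct (R_euclid_div T0 t HT) as [j [r [Hr ->]]].
  rewrite (Zshift_eq f T0 Hp). apply HM. lra.
Qed.

Lemma periodic_min f T0 : 0 < T0 -> (forall t, continuity_pt f t) -> (forall t, f (t + T0) = f t) ->
  exists tm, forall t, f tm <= f t.
Proof.
  intros HT Hc Hp. destruct (periodic_max (fun t => - f t) T0 HT) as [m Hm].
  - intro t. apply continuity_pt_opp. auto.
  - intro t. rewrite Hp. auto.
  - exists m. intro t. specialize (Hm t). lra.
Qed.

Lemma next_zero_after_simple_zero f f' t1 L : (forall t, dl f t (f' t)) ->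
  f t1 = 0 -> f' t1 <> 0 -> 0 < L -> f (t1 + L) = 0 ->
  exists t2, t1 < t2 <= t1 + L /\ f t2 = 0 /\ forall s, t1 < s < t2 -> 0 < f s * f' t1.
Proof.
  intros Hd H1 HP HL HfL.
  assert (Hc : forall t, continuity_pt f t) by (intro t; apply (dl_continuity_pt _ _ _ (Hd t))).
  destruct (sign_near_simple_zero f t1 (f' t1) (Hd t1) H1 HP) as [eps [Heps Hsg]].
  set (u := Rmin (eps / 2) (L / 2)).
  assert (Hu : 0 < u <= eps / 2 /\ u <= L / 2) by (unfold u, Rmin; destruct Rle_dec; lra).
  assert (Hfu : 0 < f (t1 + u) * f' t1) by (apply Hsg; lra).
  destruct (first_zero f (t1 + u) (t1 + L) Hc ltac:(lra)
     ltac:(intro E; rewrite E in Hfu; lra) HfL) as [t2 [Ht2 [Hf2 Hnz]]].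
  exists t2. split; [lra|split; [exact Hf2|]].
  intros s Hs. destruct (Rlt_dec s (t1 + eps)).
  - replace s with (t1 + (s - t1)) by ring. apply Hsg. lra.
  - assert (Hsame : 0 < f (t1 + u) * f s) by
      (apply same_sign_of_no_zero; auto; [lra|intros t Ht; apply Hnz; lra]).
    assert (0 < f' t1 * f' t1) by (apply Rsqr_pos_lt in HP; exact HP).
    nra.
Qed.

Lemma opposite_slopes_at_next_zero f f' t1 t2 P : (forall t, dl f t (f' t)) -> t1 < t2 ->
  (forall s, t1 < s < t2 -> 0 < f s * P) -> f t2 = 0 -> f' t2 <> 0 -> P * f' t2 < 0.
Proof.
  intros Hd H12 Hpos Hf2 HQ.
  destruct (sign_near_simple_zero f t2 (f' t2) (Hd t2) Hf2 HQ) as [eps [Heps Hsg]].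
  set (u := Rmin (eps / 2) ((t2 - t1) / 2)).
  assert (Hu : 0 < u <= eps / 2 /\ u <= (t2 - t1) / 2) by (unfold u, Rmin; destruct Rle_dec; lra).
  assert (A := proj2 (Hsg u ltac:(lra))). assert (B := Hpos (t2 - u) ltac:(lra)).
  assert (0 < f (t2 - u) * f (t2 - u)) by (apply Rsqr_pos_lt; intro E; rewrite E in B; lra).
  nra.
Qed.

(** * Uniqueness for x'' = F(x) *)

Lemma lipschitz_of_deriv_bound (F F' : R -> R) (S : R -> Prop) K :
  (forall x, dl F x (F' x)) ->
  (forall a b c, S a -> S b -> Rmin a b <= c <= Rmax a b -> Rabs (F' c) <= K) ->
  forall a b, S a -> S b -> Rabs (F a - F b) <= K * Rabs (a - b).
Proof.
  intros Hd Hb a b Ha Hb'.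
  destruct (MVT_abs F F' b a (fun c _ => Hd c)) as [c [E Hc]].
  rewrite E. apply Rmult_le_compat_r; [apply Rabs_pos|].
  apply (Hb a b c Ha Hb'). rewrite Rmin_comm, Rmax_comm. exact Hc.
Qed.

Lemma lipschitz_on_interval F F' M : (forall x, dl F x (F' x)) -> (forall x, continuity_pt F' x) ->
  exists K, 0 <= K /\
    forall a b, Rabs a <= M -> Rabs b <= M -> Rabs (F a - F b) <= K * Rabs (a - b).
Proof.
  intros Hd Hc. destruct (Rle_dec 0 M) as [HM|HM].
  - destruct (continuity_ab_maj (fun x => Rabs (F' x)) (- M) M ltac:(lra))
      as [c [Hc1 _]];
      [intros x _; exact (continuity_pt_comp F' Rabs x (Hc x) (Rcontinuity_abs (F' x)))|].
    exists (Rabs (F' c)). split; [apply Rabs_pos|].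
    apply (lipschitz_of_deriv_bound F F' (fun x => Rabs x <= M)); [exact Hd|].
    intros a b x Ha Hb Hx. apply Hc1.
    apply Rabs_le_inv in Ha, Hb. unfold Rmin, Rmax in Hx. destruct Rle_dec; lra.
  - exists 0. split; [lra|]. intros a b Ha. pose proof (Rabs_pos a). lra.
Qed.

(* The weights exp(-/+ L (s - t0)) turn |E'| <= L E into monotonicity on each side of t0. *)
Lemma gronwall_zero (E E' : R -> R) L t0 :
  (forall t, dl E t (E' t)) -> (forall t, 0 <= E t) -> (forall t, Rabs (E' t) <= L * E t) ->
  E t0 = 0 -> forall t, E t = 0.
Proof.
  intros dE Epos bE E0 t.
  assert (bE' : forall s, - (L * E s) <= E' s <= L * E s).
  { intro s. specialize (bE s). pose proof (Rle_abs (E' s)).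
    pose proof (Rle_abs (- E' s)). rewrite Rabs_Ropp in *. lra. }
  assert (dW : forall c s, dl (fun s => exp (c * (s - t0))) s (c * exp (c * (s - t0)))).
  { intros c s. apply dl_eq with (exp (c * (s - t0)) * (c * (1 - 0))); [|ring].
    apply (derivable_pt_lim_comp (fun s => c * (s - t0)) exp); [|apply derivable_pt_lim_exp].
    apply dl_cmul, derivable_pt_lim_minus; [apply derivable_pt_lim_id|apply derivable_pt_lim_const]. }
  specialize (Epos t). destruct (Rle_dec t0 t) as [Ht|Ht].
  - assert (HG := deriv_nonpos_nonincreasing (fun s => E s * exp (- L * (s - t0)))
      (fun s => (E' s - L * E s) * exp (- L * (s - t0)))).
    assert (Hle : E t * exp (- L * (t - t0)) <= E t0 * exp (- L * (t0 - t0))).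
    { apply HG; [|intro s; pose proof (exp_pos (- L * (s - t0))); specialize (bE' s); nra|lra].
      intro s. apply dl_eq with (E' s * exp (- L * (s - t0)) + E s * (- L * exp (- L * (s - t0))));
        [apply (derivable_pt_lim_mult E (fun s => exp (- L * (s - t0)))); [apply dE|apply dW]|ring]. }
    rewrite E0 in Hle. pose proof (exp_pos (- L * (t - t0))). nra.
  - assert (HG := deriv_nonpos_nonincreasing (fun s => - (E s * exp (L * (s - t0))))
      (fun s => - ((E' s + L * E s) * exp (L * (s - t0))))).
    assert (Hle : - (E t0 * exp (L * (t0 - t0))) <= - (E t * exp (L * (t - t0)))).
    { apply HG; [|intro s; pose proof (exp_pos (L * (s - t0))); specialize (bE' s); nra|lra].
      intro s. apply derivable_pt_lim_opp.
      apply dl_eq with (E' s * exp (L * (s - t0)) + E s * (L * exp (L * (s - t0))));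
        [apply (derivable_pt_lim_mult E (fun s => exp (L * (s - t0)))); [apply dE|apply dW]|ring]. }
    rewrite E0 in Hle. pose proof (exp_pos (L * (t - t0))). nra.
Qed.

(* Gronwall applied to the energy of the difference, |x1 - x2|^2 + |p1 - p2|^2. *)
Lemma ode2_uniqueness (F : R -> R) (S : R -> Prop) K : 0 <= K ->
  (forall a b, S a -> S b -> Rabs (F a - F b) <= K * Rabs (a - b)) ->
  forall x1 p1 x2 p2 t0, (forall t, S (x1 t)) -> (forall t, S (x2 t)) ->
  (forall t, dl x1 t (p1 t) /\ dl p1 t (F (x1 t))) ->
  (forall t, dl x2 t (p2 t) /\ dl p2 t (F (x2 t))) ->
  x1 t0 = x2 t0 -> p1 t0 = p2 t0 -> forall t, x1 t = x2 t /\ p1 t = p2 t.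
Proof.
  intros HK HL x1 p1 x2 p2 t0 S1 S2 D1 D2 E1 E2 t.
  set (E := fun t => (x1 t - x2 t) * (x1 t - x2 t) + (p1 t - p2 t) * (p1 t - p2 t)).
  assert (HE : E t = 0).
  { apply (gronwall_zero E (fun t => 2 * (x1 t - x2 t) * (p1 t - p2 t)
        + 2 * (p1 t - p2 t) * (F (x1 t) - F (x2 t))) (1 + K) t0).
    - intro s. destruct (D1 s) as [a1 b1], (D2 s) as [a2 b2].
      assert (dx := derivable_pt_lim_minus _ _ _ _ _ a1 a2).
      assert (dp := derivable_pt_lim_minus _ _ _ _ _ b1 b2).
      eapply dl_eq; [apply derivable_pt_lim_plus; apply derivable_pt_lim_mult; eassumption|].
      unfold minus_fct; ring.
    - intro s. unfold E. pose proof (Rle_0_sqr (x1 s - x2 s)).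
      pose proof (Rle_0_sqr (p1 s - p2 s)). unfold Rsqr in *. lra.
    - intro s. unfold E. assert (HF := HL _ _ (S1 s) (S2 s)).
      set (u := x1 s - x2 s) in *. set (v := p1 s - p2 s) in *.
      set (w := F (x1 s) - F (x2 s)) in *. clearbody u v w.
      assert (Rabs (2 * u * v + 2 * v * w) <= 2 * Rabs u * Rabs v + 2 * Rabs v * Rabs w).
      { eapply Rle_trans; [apply Rabs_triang|]. rewrite !Rabs_mult, (Rabs_right 2) by lra. lra. }
      assert (Rabs v * Rabs w <= Rabs v * (K * Rabs u)) by
        (apply Rmult_le_compat_l; [apply Rabs_pos|auto]).
      assert (Hu2 : Rabs u * Rabs u = u * u)
        by (rewrite <- Rabs_mult; apply Rabs_right, Rle_ge, Rle_0_sqr).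
      assert (Hv2 : Rabs v * Rabs v = v * v)
        by (rewrite <- Rabs_mult; apply Rabs_right, Rle_ge, Rle_0_sqr).
      pose proof (Rabs_pos u). pose proof (Rabs_pos v).
      assert (0 <= (Rabs u - Rabs v) * (Rabs u - Rabs v)) by apply Rle_0_sqr.
      nra.
    - unfold E. rewrite E1, E2. ring. }
  unfold E in HE. pose proof (Rle_0_sqr (x1 t - x2 t)). pose proof (Rle_0_sqr (p1 t - p2 t)).
  unfold Rsqr in *. split; nra.
Qed.

(** * The separated two-center problem *)

Lemma cosh_ge1 x : 1 <= cosh x.
Proof.
  unfold cosh. pose proof (exp_ineq1_le x). pose proof (exp_ineq1_le (- x)). lra.
Qed.

Lemma Rabs_le_2cosh x : Rabs x <= 2 * cosh x.
Proof.
  unfold cosh. pose proof (exp_ineq1_le x). pose proof (exp_ineq1_le (- x)).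
  pose proof (exp_pos x). pose proof (exp_pos (- x)). apply Rabs_le. lra.
Qed.

Lemma cosh_opp x : cosh (- x) = cosh x.
Proof. unfold cosh. rewrite Ropp_involutive. field. Qed.

Lemma sinh_opp x : sinh (- x) = - sinh x.
Proof. unfold sinh. rewrite Ropp_involutive. field. Qed.

Lemma cosh_inj u v : cosh u = cosh v -> u + v <> 0 -> u = v.
Proof.
  intros E Huv. unfold cosh in E. rewrite !exp_Ropp in E.
  pose proof (exp_pos u). pose proof (exp_pos v).
  assert (Hf : (exp u - exp v) * (1 - / (exp u * exp v)) = 0).
  { replace ((exp u - exp v) * (1 - / (exp u * exp v)))
      with ((exp u + / exp u) - (exp v + / exp v)) by (field; lra). lra. }
  apply Rmult_integral in Hf. destruct Hf as [Hf|Hf]; [apply exp_inv; lra|].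
  exfalso. apply Huv, exp_inv. rewrite exp_plus, exp_0.
  rewrite <- (Rinv_inv (exp u * exp v)). replace (/ (exp u * exp v)) with 1 by lra. apply Rinv_1.
Qed.

Lemma cos_reflect a y : cos a = 0 -> cos (2 * a - y) = - cos y.
Proof.
  intros Ha. rewrite cos_minus, sin_2a, cos_2a_sin, Ha.
  assert (sin a * sin a = 1) by (pose proof (sin2 a); unfold Rsqr in *; rewrite Ha in *; lra).
  replace (1 - 2 * sin a * sin a) with (-1) by lra. ring.
Qed.

Lemma sin_reflect a y : cos a = 0 -> sin (2 * a - y) = sin y.
Proof.
  intros Ha. rewrite sin_minus, sin_2a, cos_2a_sin, Ha.
  assert (sin a * sin a = 1) by (pose proof (sin2 a); unfold Rsqr in *; rewrite Ha in *; lra).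
  replace (1 - 2 * sin a * sin a) with (-1) by lra. ring.
Qed.

Section TwoCenter.
Variables d m1 m2 h g : R.
Hypotheses (Hd : 0 < d) (Hh : h < 0).

Definition Flam l := - dH_lam d m1 m2 h l.
Definition Fnu n := - dH_nu d m1 m2 h n.

Definition solves_lam (x p : R -> R) := forall t, dl x t (p t) /\ dl p t (Flam (x t)).
Definition solves_nu (x p : R -> R) := forall t, dl x t (p t) /\ dl p t (Fnu (x t)).
Definition on_level_lam (x p : R -> R) := forall t, H_lam d m1 m2 h (x t) (p t) = - g.
Definition on_level_nu (x p : R -> R) := forall t, H_nu d m1 m2 h (x t) (p t) = g.

Lemma level_lam_bounded : exists M, forall l p, H_lam d m1 m2 h l p = - g -> Rabs l <= M.
Proof.
  set (A := d * (m1 + m2)). set (B := - h * d ^ 2).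
  assert (HB : 0 < B) by (unfold B; assert (0 < d ^ 2) by (apply pow_lt; auto); nra).
  exists (2 * ((Rabs g + A) / B)). intros l p E.
  eapply Rle_trans; [apply Rabs_le_2cosh|]. apply Rmult_le_compat_l; [lra|].
  apply Rmult_le_reg_l with B; [exact HB|]. field_simplify; [|lra].
  unfold H_lam in E. pose proof (cosh_ge1 l). pose proof (pow2_ge_0 p).
  pose proof (Rle_abs (- g)). rewrite Rabs_Ropp in *.
  assert (B * cosh l * cosh l = - g - p ^ 2 / 2 + A * cosh l) by (unfold A, B; rewrite <- E; ring).
  assert (B * cosh l * cosh l <= (Rabs g + A) * cosh l) by (pose proof (Rabs_pos g); nra).
  apply Rmult_le_reg_r with (cosh l); lra.
Qed.

Lemma Flam_deriv l :
  dl Flam l (d * (m1 + m2) * cosh l + 2 * h * d ^ 2 * (sinh l * sinh l + cosh l * cosh l)).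
Proof.
  apply (derivable_pt_lim_ext (fun l => d * (m1 + m2) * sinh l + 2 * h * d ^ 2 * (cosh l * sinh l)));
    [intro t; unfold Flam, dH_lam; ring|].
  eapply dl_eq; [apply derivable_pt_lim_plus; apply dl_cmul;
    [apply derivable_pt_lim_sinh|apply derivable_pt_lim_mult;
      [apply derivable_pt_lim_cosh|apply derivable_pt_lim_sinh]]|].
  unfold mult_fct. ring.
Qed.

Lemma Fnu_deriv n :
  dl Fnu n (d * (m1 - m2) * sin n - 2 * h * d ^ 2 * (cos n * cos n - sin n * sin n)).
Proof.
  apply (derivable_pt_lim_ext (fun n => - (d * (m1 - m2)) * cos n - 2 * h * d ^ 2 * (sin n * cos n)));
    [intro t; unfold Fnu, dH_nu; ring|].
  eapply dl_eq; [apply derivable_pt_lim_minus; apply dl_cmul;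
    [apply derivable_pt_lim_cos|apply derivable_pt_lim_mult;
      [apply derivable_pt_lim_sin|apply derivable_pt_lim_cos]]|].
  unfold mult_fct. ring.
Qed.

Lemma Fnu_lipschitz : exists K, 0 <= K /\ forall a b, Rabs (Fnu a - Fnu b) <= K * Rabs (a - b).
Proof.
  set (B := - h * d ^ 2).
  assert (HB : 0 < B) by (unfold B; assert (0 < d ^ 2) by (apply pow_lt; auto); nra).
  exists (Rabs (d * (m1 - m2)) + 4 * B). split; [pose proof (Rabs_pos (d * (m1 - m2))); lra|].
  intros a b.
  apply (lipschitz_of_deriv_bound Fnu
    (fun n => d * (m1 - m2) * sin n - 2 * h * d ^ 2 * (cos n * cos n - sin n * sin n))
    (fun _ => True)); auto; [apply Fnu_deriv|].
  intros x y c _ _ _. replace (2 * h * d ^ 2) with (- 2 * B) by (unfold B; ring).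
  set (am := d * (m1 - m2)).
  assert (Hs : Rabs (am * sin c) <= Rabs am).
  { rewrite Rabs_mult. pose proof (Rabs_pos am).
    assert (Rabs (sin c) <= 1) by (apply Rabs_le, SIN_bound). nra. }
  apply Rabs_le_inv in Hs.
  pose proof (sin2_cos2 c). pose proof (Rle_0_sqr (sin c)). pose proof (Rle_0_sqr (cos c)).
  unfold Rsqr in *. apply Rabs_le. split; nra.
Qed.

Lemma solves_lam_unique x1 p1 x2 p2 t0 : solves_lam x1 p1 -> solves_lam x2 p2 ->
  on_level_lam x1 p1 -> on_level_lam x2 p2 ->
  x1 t0 = x2 t0 -> p1 t0 = p2 t0 -> forall t, x1 t = x2 t /\ p1 t = p2 t.
Proof.
  intros S1 S2 L1 L2. destruct level_lam_bounded as [M HM].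
  destruct (lipschitz_on_interval Flam _ M Flam_deriv) as [K [HK HL]]; [intro x; reg|].
  apply (ode2_uniqueness Flam (fun l => Rabs l <= M) K HK HL); auto;
    intro t; eapply HM; [apply L1|apply L2].
Qed.

Lemma solves_nu_unique x1 p1 x2 p2 t0 : solves_nu x1 p1 -> solves_nu x2 p2 ->
  x1 t0 = x2 t0 -> p1 t0 = p2 t0 -> forall t, x1 t = x2 t /\ p1 t = p2 t.
Proof.
  destruct Fnu_lipschitz as [K [HK HL]].
  apply (ode2_uniqueness Fnu (fun _ => True) K HK); auto.
Qed.

Lemma solves_lam_opp_shift x p c : solves_lam x p ->
  solves_lam (fun t => - x (t + c)) (fun t => - p (t + c)).
Proof.
  intros S t. destruct (S (t + c)) as [A B]. split; apply derivable_pt_lim_opp, dl_shift; [exact A|].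
  unfold Flam, dH_lam in *. rewrite sinh_opp, cosh_opp.
  eapply dl_eq; [exact B|ring].
Qed.

Lemma on_level_lam_opp_shift x p c : on_level_lam x p ->
  on_level_lam (fun t => - x (t + c)) (fun t => - p (t + c)).
Proof. intros L t. cbv beta. rewrite <- (L (t + c)). unfold H_lam. rewrite cosh_opp. field. Qed.

Lemma solves_nu_reverse x p c : solves_nu x p -> solves_nu (fun t => x (c - t)) (fun t => - p (c - t)).
Proof.
  intros S t. destruct (S (c - t)) as [A B]. split; [now apply dl_reflect|].
  eapply dl_eq; [apply derivable_pt_lim_opp, dl_reflect, B|ring].
Qed.

Lemma solves_nu_reflect x p c a : cos a = 0 -> solves_nu x p ->
  solves_nu (fun t => 2 * a - x (c - t)) (fun t => p (c - t)).
Proof.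
  intros Ha S t. destruct (S (c - t)) as [A B]. split.
  - eapply dl_eq;
      [apply derivable_pt_lim_minus; [apply derivable_pt_lim_const|apply dl_reflect, A]|ring].
  - replace (Fnu (2 * a - x (c - t))) with (- Fnu (x (c - t))); [now apply dl_reflect|].
    unfold Fnu, dH_nu. rewrite cos_reflect, sin_reflect by exact Ha. ring.
Qed.

End TwoCenter.

(** * Motion in lambda *)

Section LambdaMotion.
Variables d m1 m2 h g : R.
Hypotheses (Hd : 0 < d) (Hm1 : 0 < m1) (Hm2 : 0 < m2) (Hh : h < 0).
Variables lam plam : R -> R.
Hypotheses (Hsol : solves_lam d m1 m2 h lam plam) (Hlev : on_level_lam d m1 m2 h g lam plam)
  (Hreg : regular_value (H_lam d m1 m2 h) (dH_lam d m1 m2 h) (- g)).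

Lemma lam_next_zero Tl t1 : 0 < Tl -> lam t1 = 0 -> lam (t1 + Tl) = 0 ->
  exists t2, t1 < t2 <= t1 + Tl /\ lam t2 = 0 /\ plam t2 = - plam t1 /\
    forall s, t1 < s < t2 -> 0 < lam s * plam t1.
Proof.
  intros HT0 Ht1 HtT.
  assert (Hd1 : forall t, dl lam t (plam t)) by (intro t; apply Hsol).
  assert (HP : plam t1 <> 0).
  { intro E. destruct (Hreg (lam t1) (plam t1) (Hlev t1)) as [A|A]; [|contradiction].
    apply A. rewrite Ht1. unfold dH_lam, sinh. rewrite Ropp_0. field. }
  destruct (next_zero_after_simple_zero lam plam t1 Tl Hd1 Ht1 HP HT0 HtT)
    as [t2 [Ht2 [Hx2 Hpos]]].
  assert (HQ2 : plam t2 * plam t2 = plam t1 * plam t1).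
  { pose proof (Hlev t1) as A. pose proof (Hlev t2) as B. unfold H_lam in A, B.
    rewrite Ht1 in A. rewrite Hx2 in B. simpl in A, B. lra. }
  assert (HQ : plam t2 <> 0) by (intro E; rewrite E in HQ2; apply HP; nra).
  assert (HPQ := opposite_slopes_at_next_zero lam plam t1 t2 (plam t1) Hd1 ltac:(lra) Hpos Hx2 HQ).
  exists t2. split; [lra|split; [exact Hx2|split; [nra|exact Hpos]]].
Qed.

Lemma lam_antisymmetric_shift t1 t2 : lam t1 = 0 -> lam t2 = 0 -> plam t2 = - plam t1 ->
  forall s, lam (s + (t2 - t1)) = - lam s /\ plam (s + (t2 - t1)) = - plam s.
Proof.
  intros Ht1 Ht2 Hp2.
  assert (Hsym : forall s, lam s = - lam (s + - (t2 - t1)) /\ plam s = - plam (s + - (t2 - t1))).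
  { apply (solves_lam_unique d m1 m2 h g Hd Hh lam plam _ _ t2 Hsol
      (solves_lam_opp_shift d m1 m2 h lam plam _ Hsol)
      Hlev (on_level_lam_opp_shift d m1 m2 h g lam plam _ Hlev));
      replace (t2 + - (t2 - t1)) with t1 by ring; lra. }
  intro s. destruct (Hsym (s + (t2 - t1))) as [A B].
  replace (s + (t2 - t1) + - (t2 - t1)) with s in A, B by ring. lra.
Qed.

Lemma lam_half_period_antisymmetric Tl t1 : min_period (lam_per lam plam) Tl -> lam t1 = 0 ->
  (forall s, lam (s + Tl / 2) = - lam s) /\ (forall s, t1 < s < t1 + Tl / 2 -> lam s <> 0).
Proof.
  intros [HT0 [HT1 HT2]] Ht1.
  destruct (lam_next_zero Tl t1 HT0 Ht1 ltac:(rewrite (proj1 (HT1 t1)); exact Ht1))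
    as [t2 [Ht2 [Hx2 [HQP Hpos]]]].
  assert (Hhalf := lam_antisymmetric_shift t1 t2 Ht1 Hx2 HQP).
  set (tau := t2 - t1) in *.
  assert (Hper2 : lam_per lam plam (2 * tau)).
  { intro s. destruct (Hhalf s) as [A B]. destruct (Hhalf (s + tau)) as [C D].
    replace (s + 2 * tau) with (s + tau + tau) by ring. rewrite C, D, A, B. split; ring. }
  assert (Htau : Tl = 2 * tau).
  { destruct (Rtotal_order Tl (2 * tau)) as [Hlt|[Heq|Hgt]];
      [exfalso|exact Heq|exfalso; apply (HT2 (2 * tau)); [unfold tau in *; lra|exact Hper2]].
    destruct (Rle_lt_or_eq_dec t2 (t1 + Tl) ltac:(lra)) as [Hlt2|Heq2].
    - destruct (Hhalf (t1 + Tl - tau)) as [A _].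
      replace (t1 + Tl - tau + tau) with (t1 + Tl) in A by ring.
      rewrite (proj1 (HT1 t1)), Ht1 in A.
      assert (0 < lam (t1 + Tl - tau) * plam t1) by (apply Hpos; unfold tau in *; lra).
      assert (lam (t1 + Tl - tau) = 0) by lra. nra.
    - pose proof (proj2 (HT1 t1)) as E. rewrite <- Heq2, HQP in E.
      assert (plam t1 <> 0) by (intro E0; rewrite E0 in Hpos; specialize (Hpos (t1 + tau / 2)
        ltac:(unfold tau in *; lra)); lra). lra. }
  replace (Tl / 2) with tau by lra.
  split; [intro s; apply Hhalf|].
  intros s Hs E. specialize (Hpos s ltac:(unfold tau in *; lra)). rewrite E in Hpos. lra.
Qed.

Lemma lam_zero_set Tl t1 : min_period (lam_per lam plam) Tl -> lam t1 = 0 ->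
  forall t, lam t = 0 <-> exists j : Z, t = t1 + IZR j * (Tl / 2).
Proof.
  intros HTl Ht1. pose proof (proj1 HTl) as HT0.
  destruct (lam_half_period_antisymmetric Tl t1 HTl Ht1) as [Hanti Hnz].
  assert (Hz : forall j s, lam (s + IZR j * (Tl / 2)) = 0 <-> lam s = 0).
  { apply (Zshift_iff (fun u => lam u = 0)). intro s. rewrite Hanti. split; intro; lra. }
  intro t. split.
  - intro Hx. destruct (R_euclid_div (Tl / 2) (t - t1) ltac:(lra)) as [j [r [Hr1 Hr2]]].
    exists j. assert (Hr : lam (t1 + r) = 0)
      by (apply (Hz j); replace (t1 + r + IZR j * (Tl / 2)) with t by lra; exact Hx).
    destruct (Rle_lt_or_eq_dec 0 r ltac:(lra)) as [Hr0|<-]; [|lra].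
    exfalso. exact (Hnz (t1 + r) ltac:(lra) Hr).
  - intros [j ->]. now apply Hz.
Qed.

(* If d (m1 + m2) <= -2 h d^2 the lambda-potential is minimal at 0 and regularity excludes
   equality; otherwise the turning point of nu bounds g. *)
Lemma lam_level_above_origin : (exists v, H_nu d m1 m2 h v 0 = g) -> H_lam d m1 m2 h 0 0 < - g.
Proof.
  intros [v Hv].
  set (A := d * (m1 + m2)). set (B := - h * d ^ 2).
  assert (HB : 0 < B) by (unfold B; assert (0 < d ^ 2) by (apply pow_lt; auto); nra).
  assert (HA : 0 < A) by (unfold A; nra).
  assert (H00 : H_lam d m1 m2 h 0 0 = B - A) by (unfold H_lam, A, B; rewrite cosh_0; field).
  rewrite H00. destruct (Rle_dec A (2 * B)) as [HAB|HAB].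
  - set (c := cosh (lam 0)). pose proof (cosh_ge1 (lam 0)) as Hc. fold c in Hc.
    pose proof (Hlev 0) as L0. unfold H_lam in L0. fold c in L0.
    assert (0 <= (c - 1) * (B * (c + 1) - A)) by (apply Rmult_le_pos; nra).
    pose proof (pow2_ge_0 (plam 0)).
    assert (B - A <= - g) by (unfold A, B in *; simpl in *; nra).
    destruct (Rle_lt_or_eq_dec _ _ H1) as [|E]; [assumption|exfalso].
    destruct (Hreg 0 0) as [F|F]; [|apply F|apply F; reflexivity].
    + rewrite H00. exact E.
    + unfold dH_lam. rewrite sinh_0. ring.
  - unfold H_nu in Hv. set (s := sin v) in *. set (am := d * (m1 - m2)) in *.
    assert (Ham : Rabs am < A).
    { unfold am, A. rewrite Rabs_mult, Rabs_right by lra.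
      apply Rmult_lt_compat_l; [lra|apply Rabs_def1; lra]. }
    assert (Hams : am * s <= Rabs am * Rabs s) by (rewrite <- Rabs_mult; apply Rle_abs).
    assert (Hss : s * s = Rabs s * Rabs s) by (rewrite <- Rabs_mult; symmetry;
      apply Rabs_right, Rle_ge, Rle_0_sqr).
    assert (Hu : 0 <= Rabs s <= 1) by (split; [apply Rabs_pos|apply Rabs_le, SIN_bound]).
    assert (Hg : g = am * s - B * (s * s)) by (rewrite <- Hv; unfold B; field).
    set (u := Rabs s) in *. set (aa := Rabs am) in *. clearbody u aa.
    assert (0 <= (1 - u) * (A - B * (1 + u))) by (apply Rmult_le_pos; nra).
    destruct (Rle_lt_or_eq_dec 0 u ltac:(lra)) as [Hu0|Hu0]; [|subst u]; nra.
Qed.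

Lemma lam_has_zero Tl : min_period (lam_per lam plam) Tl -> H_lam d m1 m2 h 0 0 < - g ->
  exists t, lam t = 0.
Proof.
  intros [HT0 [HT1 _]] Hlow. apply Classical_Prop.NNPP. intro Hz.
  assert (Hnz : forall t, lam t <> 0) by (intros t E; apply Hz; eauto).
  assert (Hdx : forall t, dl lam t (plam t)) by (intro t; apply Hsol).
  assert (Hcx : forall t, continuity_pt lam t) by (intro t; apply (dl_continuity_pt _ _ _ (Hdx t))).
  assert (Hper : forall t, lam (t + Tl) = lam t) by (intro t; apply (HT1 t)).
  destruct (periodic_max lam Tl HT0 Hcx Hper) as [tM HtM].
  destruct (periodic_min lam Tl HT0 Hcx Hper) as [tm Htm].
  assert (HpM := deriv_zero_at_max lam _ tM (Hdx tM) HtM).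
  assert (Hpm := deriv_zero_at_min lam _ tm (Hdx tm) Htm).
  assert (Hlt : lam tm < lam tM).
  { destruct (Rle_lt_or_eq_dec _ _ (Htm tM)) as [E|E]; [exact E|exfalso].
    assert (Hp0 : forall t, plam t = 0) by
      (intro t; apply (deriv_of_constant lam (lam tm) t); [intro s; specialize (HtM s);
       specialize (Htm s); lra|apply Hdx]).
    assert (HF : Flam d m1 m2 h (lam 0) = 0) by
      (apply (deriv_of_constant plam 0 0); [exact Hp0|apply Hsol]).
    destruct (Hreg (lam 0) (plam 0) (Hlev 0)) as [F|F]; apply F; [unfold Flam in HF; lra|apply Hp0]. }
  assert (Hc12 : cosh (lam tm) <> cosh (lam tM)).
  { intro E. apply cosh_inj in E; [lra|].
    destruct (continuous_nonvanishing_sign lam Hcx Hnz) as [P|P];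
      specialize (P tm) as P1; specialize (P tM) as P2; lra. }
  pose proof (Hlev tm) as L1. pose proof (Hlev tM) as L2.
  unfold H_lam in L1, L2, Hlow. rewrite Hpm in L1. rewrite HpM in L2. rewrite cosh_0 in Hlow.
  pose proof (cosh_ge1 (lam tm)). pose proof (cosh_ge1 (lam tM)).
  set (c1 := cosh (lam tm)) in *. set (c2 := cosh (lam tM)) in *.
  set (A := d * (m1 + m2)) in *. set (B := - h * d ^ 2).
  assert (HB : 0 < B) by (unfold B; assert (0 < d ^ 2) by (apply pow_lt; auto); nra).
  assert (E12 : (c1 - c2) * (B * (c1 + c2) - A) = 0) by (unfold B; simpl in *; nra).
  apply Rmult_integral in E12. destruct E12 as [E|E]; [apply Hc12; lra|].
  assert (0 <= (c1 - 1) * (c2 - 1) * B) by (apply Rmult_le_pos; [apply Rmult_le_pos|]; lra).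
  unfold B in *. simpl in *. nra.
Qed.

End LambdaMotion.

(** * Motion in nu *)

Lemma sin_Zperiod j s : sin (s + IZR j * (2 * PI)) = sin s.
Proof. apply (Zshift_eq sin). intro u. rewrite sin_plus, sin_2PI, cos_2PI. ring. Qed.

Lemma cos_Zperiod j s : cos (s + IZR j * (2 * PI)) = cos s.
Proof. apply (Zshift_eq cos). intro u. rewrite cos_plus, sin_2PI, cos_2PI. ring. Qed.

Lemma eqmod2pi_sin a b : eqmod2pi a b -> sin a = sin b.
Proof.
  intros [k ->]. replace (b + 2 * PI * IZR k) with (b + IZR k * (2 * PI)) by ring.
  apply sin_Zperiod.
Qed.

Lemma eqmod2pi_cos a b : eqmod2pi a b -> cos a = cos b.
Proof.
  intros [k ->]. replace (b + 2 * PI * IZR k) with (b + IZR k * (2 * PI)) by ring.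
  apply cos_Zperiod.
Qed.

Lemma sin_half_odd_pi n : sin (- (PI / 2) + IZR n * PI) = if Z.even n then -1 else 1.
Proof.
  rewrite (Z.div2_odd n) at 1. rewrite plus_IZR, mult_IZR, <- Z.negb_odd.
  set (m := Z.div2 n). destruct (Z.odd n); cbn [Z.b2z negb].
  - replace (- (PI / 2) + (IZR 2 * IZR m + IZR 1) * PI) with (PI / 2 + IZR m * (2 * PI))
      by (simpl; field).
    rewrite sin_Zperiod. apply sin_PI2.
  - replace (- (PI / 2) + (IZR 2 * IZR m + IZR 0) * PI) with (- (PI / 2) + IZR m * (2 * PI))
      by (simpl; field).
    rewrite sin_Zperiod, sin_neg, sin_PI2. ring.
Qed.

Lemma cos_half_odd_pi n : cos (- (PI / 2) + IZR n * PI) = 0.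
Proof. apply cos_eq_0_1. exists (n - 1)%Z. rewrite minus_IZR. field. Qed.

Lemma winding_number x p Tn : (forall t, dl x t (p t)) -> nu_per x p Tn ->
  exists k : Z, forall t, x (t + Tn) = x t + 2 * PI * IZR k.
Proof.
  intros Hd Hp. destruct (proj1 (Hp 0)) as [k Hk]. exists k. intro t.
  assert (E := deriv0_constant (fun s => x (s + Tn) - x s)).
  rewrite Rplus_0_l in Hk.
  assert (x (t + Tn) - x t = x (0 + Tn) - x 0).
  { apply E. intro s. eapply dl_eq;
      [apply derivable_pt_lim_minus; [apply dl_shift, Hd|apply Hd]|].
    rewrite (proj2 (Hp s)). ring. }
  rewrite Rplus_0_l in H. lra.
Qed.

Lemma translation_Zmult (x : R -> R) T c : 0 < T -> (forall t, x (t + T) = x t + c) ->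
  forall j t, x (t + IZR j * T) = x t + IZR j * c.
Proof.
  intros HT Hx j t.
  assert (H : forall s, x (s + T) - (s + T) * (c / T) = x s - s * (c / T))
    by (intro s; rewrite Hx; field; lra).
  pose proof (Zshift_eq (fun v => x v - v * (c / T)) T H j t) as Hj. cbv beta in Hj.
  replace ((t + IZR j * T) * (c / T)) with (t * (c / T) + IZR j * c) in Hj by (field; lra).
  lra.
Qed.

Lemma translation_half_step (x : R -> R) c D delta : 0 < D ->
  (forall t, x (t + 2 * D) = x t + 2 * delta) -> x (c + D) = x c + delta ->
  forall j, x (c + IZR j * D) = x c + IZR j * delta.
Proof.
  intros HD Hx Hc j.
  assert (Hj := translation_Zmult x (2 * D) (2 * delta) ltac:(lra) Hx (Z.div2 j)).
  rewrite (Z.div2_odd j), plus_IZR, mult_IZR. destruct (Z.odd j); cbn [Z.b2z].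
  - replace (c + (IZR 2 * IZR (Z.div2 j) + IZR 1) * D) with (c + D + IZR (Z.div2 j) * (2 * D))
      by (simpl; ring).
    rewrite Hj, Hc. simpl. ring.
  - replace (c + (IZR 2 * IZR (Z.div2 j) + IZR 0) * D) with (c + IZR (Z.div2 j) * (2 * D))
      by (simpl; ring).
    rewrite Hj. simpl. ring.
Qed.

Lemma translation_surjective x T c : (forall t, continuity_pt x t) -> 0 < T -> c <> 0 ->
  (forall t, x (t + T) = x t + c) -> forall y, exists t, x t = y.
Proof.
  intros Hc HT Hc0 Hx y.
  set (j := Int_part ((y - x 0) / c)).
  destruct (base_Int_part ((y - x 0) / c)) as [B1 B2]. fold j in B1, B2.
  assert (Hj1 := translation_Zmult x T c HT Hx j 0).
  assert (Hj2 := translation_Zmult x T c HT Hx (j + 1) 0).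
  rewrite plus_IZR, !Rplus_0_l in *.
  destruct (IVT_between x (IZR j * T) ((IZR j + 1) * T) y Hc ltac:(nra)) as [t [_ Ht]];
    [|now exists t].
  rewrite Hj1, Hj2. assert (y - x 0 = (y - x 0) / c * c) by (field; lra).
  unfold Rmin, Rmax. destruct (Rdichotomy _ _ Hc0); destruct Rle_dec; split; nra.
Qed.

Lemma half_odd_pi_lattice (x : R -> R) (sg : Z) c D : (sg = 1 \/ sg = -1)%Z ->
  (forall u v, u < v -> IZR sg * x u < IZR sg * x v) ->
  (forall j, x (c + IZR j * D) = - (PI / 2) + IZR (sg * j) * PI) ->
  (forall t, cos (x t) = 0 <-> exists j : Z, t = c + IZR j * D) /\
  (forall j : Z, sin (x (c + IZR j * D)) = if Z.even j then -1 else 1).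
Proof.
  intros Hsg Hmono Hvals. split.
  - intro t. split.
    + intro Hct. destruct (cos_eq_0_0 _ Hct) as [k' Ek']. exists (sg * (k' + 1))%Z.
      assert (Hv : x (c + IZR (sg * (k' + 1)) * D) = x t).
      { rewrite Hvals, Ek'.
        replace (sg * (sg * (k' + 1)))%Z with (k' + 1)%Z by (destruct Hsg as [-> | ->]; ring).
        rewrite plus_IZR. simpl. field. }
      destruct (Rtotal_order t (c + IZR (sg * (k' + 1)) * D)) as [Hlt|[Heq|Hlt]];
        [exfalso|exact Heq|exfalso]; apply Hmono in Hlt; rewrite Hv in Hlt; lra.
    + intros [j ->]. rewrite Hvals. apply cos_half_odd_pi.
  - intro j. rewrite Hvals, sin_half_odd_pi, Z.even_mul.
    destruct Hsg as [-> | ->]; reflexivity.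
Qed.

Section NuMotion.
Variables d m1 m2 h g : R.
Hypotheses (Hd : 0 < d) (Hh : h < 0).
Variables nu pnu : R -> R.
Hypothesis Hsol : solves_nu d m1 m2 h nu pnu.

Lemma nu_reversal t0 : pnu t0 = 0 -> forall u, nu u = nu (2 * t0 - u) /\ pnu u = - pnu (2 * t0 - u).
Proof.
  intros H0. apply (solves_nu_unique d m1 m2 h Hd Hh nu pnu _ _ t0 Hsol
    (solves_nu_reverse d m1 m2 h nu pnu _ Hsol));
    replace (2 * t0 - t0) with t0 by ring; lra.
Qed.

Lemma nu_reflection c : cos (nu c) = 0 ->
  forall u, nu u = 2 * nu c - nu (2 * c - u) /\ pnu u = pnu (2 * c - u).
Proof.
  intros Hc. apply (solves_nu_unique d m1 m2 h Hd Hh nu pnu _ _ c Hsol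
    (solves_nu_reflect d m1 m2 h nu pnu _ _ Hc Hsol)); replace (2 * c - c) with c by ring; lra.
Qed.

Lemma nu_translation c c' : cos (nu c) = 0 -> cos (nu c') = 0 ->
  forall u, nu (u + 2 * (c' - c)) = nu u + 2 * (nu c' - nu c) /\ pnu (u + 2 * (c' - c)) = pnu u.
Proof.
  intros Hc Hc' u. destruct (nu_reflection c' Hc' (u + 2 * (c' - c))) as [A B].
  destruct (nu_reflection c Hc u) as [C D].
  replace (2 * c' - (u + 2 * (c' - c))) with (2 * c - u) in A, B by ring. lra.
Qed.

Lemma nu_rotation_momentum_nonzero Tn k : (forall t, nu (t + Tn) = nu t + 2 * PI * IZR k) ->
  IZR k <> 0 -> forall t, pnu t <> 0.
Proof.
  intros Hk Hk0 t0 E0. destruct (nu_reversal t0 E0 (t0 + Tn)) as [A _].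
  replace (2 * t0 - (t0 + Tn)) with (t0 - Tn) in A by ring.
  pose proof (Hk (t0 - Tn)) as B. replace (t0 - Tn + Tn) with t0 in B by ring.
  rewrite Hk in A. assert (E : PI * IZR k = 0) by lra. pose proof PI_RGT_0.
  apply Rmult_integral in E. destruct E; lra.
Qed.

Lemma nu_rotation_monotone Tn : min_period (nu_per nu pnu) Tn -> nu Tn <> nu 0 ->
  exists sg k : Z, (sg = 1 \/ sg = -1)%Z /\ (forall t, nu (t + Tn) = nu t + 2 * PI * IZR k) /\
    1 <= IZR sg * IZR k /\ forall u v, u < v -> IZR sg * nu u < IZR sg * nu v.
Proof.
  intros [HT0 [HT1 _]] Hneq.
  destruct (winding_number nu pnu Tn (fun t => proj1 (Hsol t)) HT1) as [k Hk].
  assert (Hk0 : IZR k <> 0) by (intro E; apply Hneq; rewrite <- (Rplus_0_l Tn), Hk, E; ring).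
  assert (Hsgn : exists sg : Z, (sg = 1 \/ sg = -1)%Z /\ forall t, 0 < IZR sg * pnu t).
  { destruct (continuous_nonvanishing_sign pnu (fun t => dl_continuity_pt _ _ _ (proj2 (Hsol t)))
      (nu_rotation_momentum_nonzero Tn k Hk Hk0)) as [Hsg|Hsg];
      [exists 1%Z|exists (-1)%Z]; split; auto; intro t; specialize (Hsg t); simpl; lra. }
  destruct Hsgn as [sg [Hsg1 Hsp]].
  assert (Hmono : forall u v, u < v -> IZR sg * nu u < IZR sg * nu v).
  { intros u v Huv. apply (deriv_pos_increasing (fun t => IZR sg * nu t) (fun t => IZR sg * pnu t) u v);
      [intro t; apply dl_cmul, Hsol|intros; apply Hsp|lra|exact Huv|lra]. }
  exists sg, k. split; [exact Hsg1|split; [exact Hk|split; [|exact Hmono]]].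
  pose proof (Hmono 0 Tn HT0) as A. rewrite <- (Rplus_0_l Tn), Hk in A. pose proof PI_RGT_0.
  assert (0 < IZR (sg * k)) by (rewrite mult_IZR; nra).
  apply lt_IZR in H0. rewrite <- mult_IZR. apply IZR_le. lia.
Qed.

Lemma nu_rotation_crossings Tn : min_period (nu_per nu pnu) Tn -> nu Tn <> nu 0 ->
  exists c D, 0 < D /\ Tn = 2 * D /\
    (forall t, cos (nu t) = 0 <-> exists j : Z, t = c + IZR j * D) /\
    (forall j : Z, sin (nu (c + IZR j * D)) = if Z.even j then -1 else 1).
Proof.
  intros HTn Hneq. pose proof HTn as [HT0 [_ HT2]]. pose proof PI_RGT_0 as HPI.
  destruct (nu_rotation_monotone Tn HTn Hneq) as [sg [k [Hsg1 [Hk [Hsk Hmono]]]]].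
  set (s := IZR sg) in *.
  assert (Hs2 : s * s = 1) by (unfold s; destruct Hsg1 as [-> | ->]; simpl; lra).
  assert (Hcx : forall t, continuity_pt nu t) by
    (intro t; apply (dl_continuity_pt _ _ _ (proj1 (Hsol t)))).
  assert (Hk0 : 2 * PI * IZR k <> 0).
  { intro E. apply Rmult_integral in E. destruct E as [E|E]; [lra|rewrite E in Hsk; lra]. }
  destruct (translation_surjective nu Tn (2 * PI * IZR k) Hcx HT0 Hk0 Hk (- (PI / 2))) as [c Hc].
  destruct (translation_surjective nu Tn (2 * PI * IZR k) Hcx HT0 Hk0 Hk
    (- (PI / 2) + s * PI)) as [c' Hc'].
  assert (Hcc' : c < c').
  { destruct (Rtotal_order c c') as [|[<-|Hlt]]; [assumption|nra|].
    apply Hmono in Hlt. nra. }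
  set (D := c' - c).
  assert (Hcos0 : cos (nu c) = 0).
  { rewrite Hc. replace (- (PI / 2)) with (- (PI / 2) + IZR 0 * PI) by (simpl; ring).
    apply cos_half_odd_pi. }
  assert (Hcos1 : cos (nu c') = 0) by (rewrite Hc'; apply cos_half_odd_pi).
  assert (Htr : forall u, nu (u + 2 * D) = nu u + 2 * (s * PI) /\ pnu (u + 2 * D) = pnu u).
  { intro u. destruct (nu_translation c c' Hcos0 Hcos1 u) as [A B]. fold D in A, B.
    split; [rewrite A, Hc, Hc'; ring|exact B]. }
  assert (HTn2 : Tn = 2 * D).
  { destruct (Rtotal_order Tn (2 * D)) as [Hlt|[Heq|Hgt]]; [exfalso|exact Heq|exfalso].
    - pose proof (Hmono (c + Tn) (c + 2 * D) ltac:(lra)) as B.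
      rewrite Hk, (proj1 (Htr c)) in B. nra.
    - apply (HT2 (2 * D)); [unfold D in *; lra|].
      intro u. destruct (Htr u) as [A B]. split; [exists sg; rewrite A; unfold s; ring|exact B]. }
  assert (Hvals : forall j, nu (c + IZR j * D) = - (PI / 2) + IZR (sg * j) * PI).
  { assert (Hhalf : nu (c + D) = nu c + s * PI)
      by (replace (c + D) with c' by (unfold D; ring); rewrite Hc', Hc; ring).
    intro j. rewrite (translation_half_step nu c D (s * PI) ltac:(unfold D; lra)
      (fun u => proj1 (Htr u)) Hhalf), Hc, mult_IZR. fold s. ring. }
  exists c, D. split; [unfold D; lra|split; [exact HTn2|]].
  exact (half_odd_pi_lattice nu sg c D Hsg1 Hmono Hvals).
Qed.

Lemma nu_periodic_of_closed Tn : nu_per nu pnu Tn -> nu Tn = nu 0 -> forall t, nu (t + Tn) = nu t.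
Proof.
  intros HT1 Heq.
  destruct (winding_number nu pnu Tn (fun t => proj1 (Hsol t)) HT1) as [k Hk].
  assert (E : PI * IZR k = 0) by (pose proof (Hk 0) as E; rewrite Rplus_0_l, Heq in E; lra).
  pose proof PI_RGT_0. apply Rmult_integral in E. destruct E as [E|E]; [lra|].
  intro t. rewrite Hk, E. ring.
Qed.

Lemma nu_periodic_cos_zeros_same_level Tn : 0 < Tn -> (forall t, nu (t + Tn) = nu t) ->
  forall c w, cos (nu c) = 0 -> cos (nu w) = 0 -> nu w = nu c.
Proof.
  intros HT Hper.
  assert (Hcx : forall t, continuity_pt nu t)
    by (intro t; apply (dl_continuity_pt _ _ _ (proj1 (Hsol t)))).
  destruct (periodic_max nu Tn HT Hcx Hper) as [tM HtM].
  assert (Hlt : forall c w, c < w -> cos (nu c) = 0 -> cos (nu w) = 0 -> nu w = nu c).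
  { intros c w Hcw Hc Hw. apply Classical_Prop.NNPP. intro Hne.
    destruct (translation_surjective nu (2 * (w - c)) (2 * (nu w - nu c)) Hcx ltac:(lra) ltac:(lra)
      (fun u => proj1 (nu_translation c w Hc Hw u)) (nu tM + 1)) as [t Ht].
    specialize (HtM t). lra. }
  intros c w Hc Hw. destruct (Rtotal_order c w) as [H|[<-|H]]; [now apply Hlt|reflexivity|].
  symmetry. now apply Hlt.
Qed.

Lemma nu_periodic_has_turning_point Tn : 0 < Tn -> (forall t, nu (t + Tn) = nu t) ->
  on_level_nu d m1 m2 h g nu pnu -> exists v, H_nu d m1 m2 h v 0 = g.
Proof.
  intros HT Hper Hlev.
  destruct (periodic_max nu Tn HT (fun t => dl_continuity_pt _ _ _ (proj1 (Hsol t))) Hper) as [tM HtM].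
  exists (nu tM). rewrite <- (Hlev tM). f_equal. symmetry.
  exact (deriv_zero_at_max nu _ tM (proj1 (Hsol tM)) HtM).
Qed.

(* In the variable sin nu the potential is strictly concave (h < 0), so it cannot stay below
   its common value at the ends of an interval on which sin is injective. *)
Lemma nu_potential_range_meets_cos_zero v1 v2 : v1 < v2 ->
  H_nu d m1 m2 h v1 0 = g -> H_nu d m1 m2 h v2 0 = g ->
  (forall v, v1 <= v <= v2 -> H_nu d m1 m2 h v 0 <= g) -> exists v, v1 <= v <= v2 /\ cos v = 0.
Proof.
  intros H12 Hv1 Hv2 Hle. apply Classical_Prop.NNPP. intro Hno.
  assert (Hs : sin v2 - sin v1 <> 0).
  { intro E. destruct (MVT_cor2 sin cos v1 v2 H12 (fun c _ => derivable_pt_lim_sin c))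
      as [xi [Exi Hxi]].
    apply Hno. exists xi. split; [lra|]. rewrite E in Exi.
    symmetry in Exi. apply Rmult_integral in Exi. destruct Exi; [auto|lra]. }
  destruct (IVT_between sin v1 v2 ((sin v1 + sin v2) / 2) continuity_sin ltac:(lra))
    as [v [Hv Hsv]]; [unfold Rmin, Rmax; destruct Rle_dec; split; lra|].
  specialize (Hle v Hv). unfold H_nu in *. rewrite Hsv in Hle.
  assert (0 < d ^ 2) by (apply pow_lt; exact Hd).
  assert (0 < (sin v2 - sin v1) * (sin v2 - sin v1)) by (apply Rsqr_pos_lt; exact Hs).
  assert (0 < - h * d ^ 2 * ((sin v2 - sin v1) * (sin v2 - sin v1))) by
    (apply Rmult_lt_0_compat; nra).
  simpl in *. nra.
Qed.

Lemma nu_periodic_meets_cos_zero Tn : 0 < Tn -> (forall t, nu (t + Tn) = nu t) ->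
  on_level_nu d m1 m2 h g nu pnu -> regular_value (H_nu d m1 m2 h) (dH_nu d m1 m2 h) g ->
  exists c, cos (nu c) = 0.
Proof.
  intros HT Hper Hlev Hreg.
  assert (Hdx : forall t, dl nu t (pnu t)) by (intro t; apply Hsol).
  assert (Hcx : forall t, continuity_pt nu t) by (intro t; apply (dl_continuity_pt _ _ _ (Hdx t))).
  destruct (periodic_max nu Tn HT Hcx Hper) as [tM HtM].
  destruct (periodic_min nu Tn HT Hcx Hper) as [tm Htm].
  assert (HpM := deriv_zero_at_max nu _ tM (Hdx tM) HtM).
  assert (Hpm := deriv_zero_at_min nu _ tm (Hdx tm) Htm).
  assert (Hrange : forall v, nu tm <= v <= nu tM -> exists t, nu t = v).
  { intros v Hv. destruct (Rle_dec tm tM).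
    - destruct (IVT_between nu tm tM v Hcx r) as [t [_ Ht]];
        [unfold Rmin, Rmax; destruct Rle_dec; lra|eauto].
    - destruct (IVT_between nu tM tm v Hcx ltac:(lra)) as [t [_ Ht]];
        [unfold Rmin, Rmax; destruct Rle_dec; lra|eauto]. }
  assert (Hlt : nu tm < nu tM).
  { destruct (Rle_lt_or_eq_dec _ _ (Htm tM)) as [A|A]; [exact A|exfalso].
    assert (Hp0 : forall t, pnu t = 0) by
      (intro t; apply (deriv_of_constant nu (nu tm) t); [intro s; specialize (HtM s);
       specialize (Htm s); lra|apply Hdx]).
    assert (HF : Fnu d m1 m2 h (nu 0) = 0) by
      (apply (deriv_of_constant pnu 0 0); [exact Hp0|apply Hsol]).
    destruct (Hreg (nu 0) (pnu 0) (Hlev 0)) as [B|B]; apply B; [unfold Fnu in HF; lra|apply Hp0]. }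
  assert (Hturn : forall t, pnu t = 0 -> H_nu d m1 m2 h (nu t) 0 = g) by
    (intros t Ht; rewrite <- (Hlev t), Ht; reflexivity).
  destruct (nu_potential_range_meets_cos_zero (nu tm) (nu tM) Hlt (Hturn tm Hpm) (Hturn tM HpM))
    as [v [Hv Hcv]].
  - intros v Hv. destruct (Hrange v Hv) as [t <-]. rewrite <- (Hlev t). unfold H_nu.
    pose proof (pow2_ge_0 (pnu t)). lra.
  - destruct (Hrange v Hv) as [c Hc]. exists c. now rewrite Hc.
Qed.

(* Between the crossing c and the next turning point t1 = c + tau, nu is monotone; reflection
   at c and reversal at t1 then give nu (u + 2 tau) = 2 nu(c) - nu(u). *)
Lemma nu_oscillation_quarter Tn c : 0 < Tn -> (forall t, nu (t + Tn) = nu t) ->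
  cos (nu c) = 0 -> pnu c <> 0 ->
  exists tau, 0 < tau /\
    (forall u, nu (u + 2 * tau) = 2 * nu c - nu u /\ pnu (u + 2 * tau) = - pnu u) /\
    (forall u, 0 < u < 2 * tau -> nu (c + u) <> nu c).
Proof.
  intros HT0 Hper Hc HPc.
  assert (Hdx : forall t, dl nu t (pnu t)) by (intro t; apply Hsol).
  assert (Hcp : forall t, continuity_pt pnu t) by
    (intro t; apply (dl_continuity_pt _ _ _ (proj2 (Hsol t)))).
  destruct (MVT_cor2 nu pnu c (c + Tn) ltac:(lra) (fun u _ => Hdx u)) as [xi [Exi Hxi]].
  assert (Hpxi : pnu xi = 0).
  { rewrite Hper in Exi. replace (c + Tn - c) with Tn in Exi by ring.
    assert (E : pnu xi * Tn = 0) by lra. apply Rmult_integral in E. destruct E; [auto|lra]. }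
  destruct (first_zero pnu c xi Hcp ltac:(lra) HPc Hpxi) as [t1 [Ht1 [Hpt1 Hnz]]].
  exists (t1 - c). split; [lra|split].
  { intro u. destruct (nu_reversal t1 Hpt1 (u + 2 * (t1 - c))) as [A B].
    destruct (nu_reflection c Hc u) as [C D].
    replace (2 * t1 - (u + 2 * (t1 - c))) with (2 * c - u) in A, B by ring. lra. }
  destruct (sign_witness _ HPc) as [s [Hs2 Hspc]].
  assert (Hsp : forall u, c <= u < t1 -> 0 < s * pnu u).
  { intros u Hu. assert (0 < pnu c * pnu u) by
      (apply same_sign_of_no_zero; auto; [lra|intros v Hv; apply Hnz; lra]).
    assert (0 < (s * pnu c) * (pnu c * pnu u)) by (apply Rmult_lt_0_compat; auto).
    assert (0 < pnu c * pnu c) by (apply Rsqr_pos_lt; exact HPc). nra. }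
  assert (Hmono : forall u, 0 < u <= t1 - c -> s * nu c < s * nu (c + u)).
  { intros u Hu. apply (deriv_pos_increasing (fun t => s * nu t) (fun t => s * pnu t) c t1);
      [intro t; apply dl_cmul, Hdx|intros t Ht; apply Hsp; lra|lra|lra|lra]. }
  intros u Hu E. destruct (Rle_dec u (t1 - c)) as [Hle|Hgt].
  - specialize (Hmono u ltac:(lra)). rewrite E in Hmono. lra.
  - destruct (nu_reversal t1 Hpt1 (c + u)) as [A _].
    replace (2 * t1 - (c + u)) with (c + (2 * (t1 - c) - u)) in A by ring.
    specialize (Hmono (2 * (t1 - c) - u) ltac:(lra)). rewrite <- A, E in Hmono. lra.
Qed.

Lemma nu_oscillation_crossings Tn : min_period (nu_per nu pnu) Tn -> nu Tn = nu 0 ->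
  on_level_nu d m1 m2 h g nu pnu -> regular_value (H_nu d m1 m2 h) (dH_nu d m1 m2 h) g ->
  exists c D a, 0 < D /\ Tn = 2 * D /\ cos a = 0 /\
    (forall t, cos (nu t) = 0 <-> exists j : Z, t = c + IZR j * D) /\
    (forall j : Z, nu (c + IZR j * D) = a).
Proof.
  intros [HT0 [HT1 HT2]] Heq Hlev Hreg.
  assert (Hper := nu_periodic_of_closed Tn HT1 Heq).
  destruct (nu_periodic_meets_cos_zero Tn HT0 Hper Hlev Hreg) as [c Hc].
  assert (HPc : pnu c <> 0).
  { intro E. destruct (Hreg (nu c) (pnu c) (Hlev c)) as [B|B]; [|contradiction].
    apply B. unfold dH_nu. rewrite Hc. ring. }
  destruct (nu_oscillation_quarter Tn c HT0 Hper Hc HPc) as [tau [Htau [Hanti Hne]]].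
  set (a := nu c) in *.
  assert (HTn : Tn = 4 * tau).
  { assert (Hper4 : nu_per nu pnu (4 * tau)).
    { intro u. destruct (Hanti u) as [A B]. destruct (Hanti (u + 2 * tau)) as [C D].
      replace (u + 4 * tau) with (u + 2 * tau + 2 * tau) by ring. rewrite C, D, A, B.
      split; [exists 0%Z; simpl; ring|ring]. }
    destruct (Rtotal_order Tn (4 * tau)) as [Hlt|[Heq4|Hgt]];
      [exfalso|exact Heq4|exfalso; apply (HT2 (4 * tau)); [lra|exact Hper4]].
    assert (Hxc : nu (c + Tn) = a) by (rewrite Hper; reflexivity).
    destruct (Rtotal_order Tn (2 * tau)) as [B|[B|B]].
    - exact (Hne Tn ltac:(lra) Hxc).
    - pose proof (proj2 (HT1 c)) as E. rewrite B, (proj2 (Hanti c)) in E. lra.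
    - replace (c + Tn) with (c + (Tn - 2 * tau) + 2 * tau) in Hxc by ring.
      rewrite (proj1 (Hanti _)) in Hxc. apply (Hne (Tn - 2 * tau)); lra. }
  assert (Hlev_a : forall j u, nu (u + IZR j * (2 * tau)) = a <-> nu u = a).
  { apply (Zshift_iff (fun u => nu u = a)). intro u. rewrite (proj1 (Hanti u)). lra. }
  exists c, (2 * tau), a. split; [lra|split; [lra|split; [exact Hc|split]]].
  - intro t. split.
    + intro Hct. destruct (R_euclid_div (2 * tau) (t - c) ltac:(lra)) as [j [r [Hr Ht]]].
      exists j. assert (Hr0 : nu (c + r) = a).
      { apply (Hlev_a j). replace (c + r + IZR j * (2 * tau)) with t by lra.
        exact (nu_periodic_cos_zeros_same_level Tn HT0 Hper c t Hc Hct). }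
      destruct (Rle_lt_or_eq_dec 0 r ltac:(lra)) as [Hr1|<-]; [|lra].
      exfalso. exact (Hne r ltac:(lra) Hr0).
    + intros [j ->]. rewrite (proj2 (Hlev_a j c) eq_refl). exact Hc.
  - intro j. now apply Hlev_a.
Qed.

End NuMotion.

Section Periods.
Variable per : R -> Prop.
Hypothesis per_sub : forall a b, per a -> per b -> per (a - b).

Lemma period_Nmult T0 : per T0 -> forall n : nat, per (INR n * T0).
Proof.
  intros H0. assert (Hz : per 0) by (replace 0 with (T0 - T0) by ring; auto).
  induction n as [|n IH]; [rewrite Rmult_0_l; exact Hz|].
  rewrite S_INR. replace ((INR n + 1) * T0) with (INR n * T0 - (0 - T0)) by ring. auto.
Qed.

Lemma min_period_multiple T0 : min_period per T0 ->
  forall P, 0 < P -> per P -> exists n : nat, (1 <= n)%nat /\ P = INR n * T0.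
Proof.
  intros [H0 [H1 H2]] P HP Hper.
  destruct (R_euclid_div T0 P H0) as [j [r [Hr HPr]]].
  assert (Hj : (0 <= j)%Z) by (cut (-1 < j)%Z; [lia|apply lt_IZR; simpl; nra]).
  assert (Hn : INR (Z.to_nat j) = IZR j) by (rewrite INR_IZR_INZ, Z2Nat.id; auto).
  assert (Hrp : per r) by (replace r with (P - INR (Z.to_nat j) * T0) by (rewrite Hn; lra);
    apply per_sub; [exact Hper|apply period_Nmult; exact H1]).
  destruct (Rle_lt_or_eq_dec 0 r ltac:(lra)) as [Hr0|<-]; [exfalso; exact (H2 r ltac:(lra) Hrp)|].
  exists (Z.to_nat j). rewrite Hn. split; [|lra].
  destruct (Z.to_nat j) as [|n] eqn:E; [|lia]. simpl in Hn. rewrite <- Hn in HPr. lra.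
Qed.

End Periods.

Lemma lam_per_sub x p a b : lam_per x p a -> lam_per x p b -> lam_per x p (a - b).
Proof.
  intros A B t. destruct (B (t + (a - b))) as [B1 B2].
  replace (t + (a - b) + b) with (t + a) in B1, B2 by ring. destruct (A t). split; congruence.
Qed.

Lemma nu_per_sub x p a b : nu_per x p a -> nu_per x p b -> nu_per x p (a - b).
Proof.
  intros A B t. destruct (B (t + (a - b))) as [[k1 B1] B2].
  replace (t + (a - b) + b) with (t + a) in B1, B2 by ring.
  destruct (A t) as [[k2 A1] A2]. split; [|congruence].
  exists (k2 - k1)%Z. rewrite minus_IZR. lra.
Qed.

(* q Tnu = p Tlam is a common period, and by coprimality every common period is a multiple of it. *)
Lemma period_relation lam plam nu pnu T Tl Tn (p q : nat) :
  min_period (state_per lam plam nu pnu) T -> min_period (lam_per lam plam) Tl ->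
  min_period (nu_per nu pnu) Tn -> (0 < p)%nat -> (0 < q)%nat -> Nat.gcd p q = 1%nat ->
  Tn / Tl = INR p / INR q -> T = INR q * Tn /\ T = INR p * Tl.
Proof.
  intros [T0 [T1 T2]] HTl HTn Hp Hq Hpq HW.
  pose proof (proj1 HTl) as Tl0. pose proof (proj1 HTn) as Tn0.
  assert (Hq' : 0 < INR q) by (apply lt_0_INR; lia). assert (Hp' : 0 < INR p) by (apply lt_0_INR; lia).
  assert (HqTn : INR q * Tn = INR p * Tl).
  { replace Tn with (Tn / Tl * Tl) by (field; lra). rewrite HW. field. lra. }
  assert (Hle : T <= INR q * Tn).
  { destruct (Rle_dec T (INR q * Tn)) as [|Hn]; [assumption|exfalso].
    apply (T2 (INR q * Tn)); [split; [nra|lra]|].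
    intro t. destruct (period_Nmult _ (nu_per_sub nu pnu) Tn (proj1 (proj2 HTn)) q t) as [A B].
    destruct (period_Nmult _ (lam_per_sub lam plam) Tl (proj1 (proj2 HTl)) p t) as [C E].
    rewrite <- HqTn in C, E. repeat split; auto. }
  destruct (min_period_multiple _ (lam_per_sub lam plam) Tl HTl T T0
    (fun t => conj (proj1 (T1 t)) (proj1 (proj2 (T1 t))))) as [a [Ha1 Ha2]].
  destruct (min_period_multiple _ (nu_per_sub nu pnu) Tn HTn T T0
    (fun t => proj2 (proj2 (T1 t)))) as [b [Hb1 Hb2]].
  assert (Hbpaq : (b * p = a * q)%nat).
  { apply INR_eq. rewrite !mult_INR. apply Rmult_eq_reg_r with (Tl / INR q).
    - replace (INR b * INR p * (Tl / INR q)) with (INR b * Tn) by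
        (replace Tn with (INR p * Tl / INR q) by (rewrite <- HqTn; field; lra); field; lra).
      rewrite <- Hb2, Ha2. field. lra.
    - apply Rgt_not_eq, Rdiv_lt_0_compat; lra. }
  destruct (Nat.gauss q p b ltac:(exists a; lia) ltac:(rewrite Nat.gcd_comm; exact Hpq)) as [z Hz].
  assert (1 <= INR z) by (apply (le_INR 1); destruct z; lia).
  assert (INR q * Tn <= T) by (rewrite Hb2, Hz, mult_INR; nra).
  split; lra.
Qed.

(** * Syzygy words *)

Definition earlier (a b : R * nat) := fst a < fst b.

Lemma StronglySorted_app l1 l2 : StronglySorted earlier l1 -> StronglySorted earlier l2 ->
  (forall x y, In x l1 -> In y l2 -> earlier x y) -> StronglySorted earlier (l1 ++ l2).
Proof.
  induction l1 as [|a l1 IH]; simpl; auto. intros H1 H2 H3. inversion H1; subst.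
  constructor; [apply IH; auto|].
  apply Forall_app; split; auto. apply Forall_forall. intros; apply H3; auto.
Qed.

Lemma StronglySorted_app_inv l1 l2 : StronglySorted earlier (l1 ++ l2) ->
  StronglySorted earlier l1 /\ StronglySorted earlier l2 /\
  (forall x y, In x l1 -> In y l2 -> earlier x y).
Proof.
  induction l1 as [|a l1 IH]; simpl; intros H.
  - split; [constructor|split; [exact H|intros; contradiction]].
  - inversion H; subst. destruct (IH H2) as [A [B C]]. apply Forall_app in H3.
    destruct H3 as [F1 F2]. split; [constructor; auto|split; auto].
    intros x y [<-|E] Hy; [rewrite Forall_forall in F2; auto|auto].
Qed.

Lemma StronglySorted_nth_lt l : StronglySorted earlier l -> forall i, (S i < length l)%nat ->
  nth i (map fst l) 0 < nth (S i) (map fst l) 0.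
Proof.
  induction l as [|a l IH]; simpl; intros H i Hi; [lia|]. inversion H; subst. destruct i.
  - destruct l as [|r l]; simpl in *; [lia|]. now inversion H3.
  - apply IH; auto. lia.
Qed.

Lemma StronglySorted_split_at T l : StronglySorted earlier l -> exists A B, l = A ++ B /\
  (forall x, In x A -> fst x < T) /\ (forall x, In x B -> T <= fst x).
Proof.
  induction l as [|a l IH]; intros H.
  - exists nil, nil. repeat split; intros; contradiction.
  - inversion H; subst. destruct (Rlt_dec (fst a) T).
    + destruct (IH H2) as [A [B [-> [HA HB]]]]. exists (a :: A), B.
      repeat split; auto. intros x [<-|Hx]; auto.
    + exists nil, (a :: l). repeat split; [intros; contradiction|].
      intros x [<-|Hx]; [lra|]. rewrite Forall_forall in H3. specialize (H3 x Hx).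
      unfold earlier in H3. lra.
Qed.

Lemma StronglySorted_map_seq (f : nat -> R) s a n : (forall i k, (i < k)%nat -> f i < f k) ->
  StronglySorted earlier (map (fun i => (f i, s)) (seq a n)).
Proof.
  intros Hf. revert a. induction n as [|n IH]; intro a; simpl; constructor; [apply IH|].
  apply Forall_forall. intros x Hx. apply in_map_iff in Hx. destruct Hx as [k [<- Hk]].
  apply in_seq in Hk. unfold earlier; simpl. apply Hf. lia.
Qed.

Lemma map_as_nth_seq {A B : Type} (f : A -> B) (l : list A) d :
  map f l = map (fun j => f (nth j l d)) (seq 0 (length l)).
Proof.
  induction l as [|a l IH]; simpl; [reflexivity|]. f_equal.
  now rewrite IH, <- seq_shift, map_map.
Qed.

Lemma rotate_app {A : Type} (l1 l2 : list A) : rotate (length l1) (l1 ++ l2) = l2 ++ l1.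
Proof.
  unfold rotate. rewrite skipn_app, firstn_app, Nat.sub_diag, skipn_all, firstn_all. simpl.
  now rewrite app_nil_r.
Qed.

Lemma length_rotate {A : Type} k (w : list A) : length (rotate k w) = length w.
Proof.
  unfold rotate. rewrite length_app, length_skipn, length_firstn. lia.
Qed.

Lemma StronglySorted_wrap T c0 A B : StronglySorted earlier (A ++ B) ->
  (forall x, In x A -> c0 <= fst x < T) -> (forall x, In x B -> T <= fst x < c0 + T) ->
  StronglySorted earlier (map (fun x => (fst x - T, snd x)) B ++ A).
Proof.
  intros HS HA HB. destruct (StronglySorted_app_inv _ _ HS) as [SA [SB _]].
  apply StronglySorted_app; auto.
  - clear -SB. induction B as [|b B IH]; simpl; constructor; inversion SB; subst; [auto|].
    rewrite Forall_forall in *. intros x Hx. apply in_map_iff in Hx.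
    destruct Hx as [y [<- Hy]]. specialize (H2 y Hy). unfold earlier in *. simpl. lra.
  - intros x y Hx Hy. apply in_map_iff in Hx. destruct Hx as [z [<- Hz]].
    specialize (HB z Hz). specialize (HA y Hy). unfold earlier. simpl. lra.
Qed.

Section Window.
Variables (lam nu : R -> R) (T : R).
Hypothesis Hper : forall t, lam (t + T) = lam t /\ sin (nu (t + T)) = sin (nu t) /\
  cos (nu (t + T)) = cos (nu t).

Lemma syz_symbol_shift t s : syz_symbol lam nu t s -> syz_symbol lam nu (t - T) s.
Proof.
  destruct (Hper (t - T)) as [P1 [P2 P3]]. replace (t - T + T) with t in * by ring.
  unfold syz_symbol. now rewrite <- P1, <- P2, <- P3.
Qed.

Lemma is_syzygy_shift t : is_syzygy lam nu t -> is_syzygy lam nu (t + T).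
Proof. destruct (Hper t) as [P1 [_ P3]]. unfold is_syzygy. now rewrite P1, P3. Qed.

Lemma syzygy_word_of_window c0 (L : list (R * nat)) : 0 <= c0 <= T ->
  StronglySorted earlier L ->
  (forall x, In x L -> c0 <= fst x < c0 + T) ->
  (forall t, c0 <= t < c0 + T -> is_syzygy lam nu t -> exists s, In (t, s) L) ->
  (forall x, In x L -> syz_symbol lam nu (fst x) (snd x)) ->
  exists w k, syzygy_word lam nu T w /\ rotate k w = map snd L.
Proof.
  intros Hc0 HS Hin Hcomp Hsym.
  destruct (StronglySorted_split_at T L HS) as [A [B [-> [HA HB]]]].
  assert (HinA : forall x, In x A -> c0 <= fst x < T) by
    (intros x Hx; specialize (Hin x (in_or_app _ _ _ (or_introl Hx))); specialize (HA x Hx); lra).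
  assert (HinB : forall x, In x B -> T <= fst x < c0 + T) by
    (intros x Hx; specialize (Hin x (in_or_app _ _ _ (or_intror Hx))); specialize (HB x Hx); lra).
  set (sh := fun x : R * nat => (fst x - T, snd x)).
  set (L' := map sh B ++ A).
  assert (HSL : StronglySorted earlier L') by exact (StronglySorted_wrap T c0 A B HS HinA HinB).
  assert (HinL : forall x, In x L' -> 0 <= fst x < T /\ syz_symbol lam nu (fst x) (snd x)).
  { intros x Hx. apply in_app_or in Hx. destruct Hx as [Hx|Hx].
    - apply in_map_iff in Hx. destruct Hx as [z [<- Hz]]. specialize (HinB z Hz). simpl.
      split; [lra|apply syz_symbol_shift, Hsym, in_or_app; now right].
    - specialize (HinA x Hx). split; [lra|apply Hsym, in_or_app; now left]. }
  exists (map snd L'), (length (map snd (map sh B))). split.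
  - exists (map fst L'). split; [|split; [|split; [|split]]].
    + now rewrite !length_map.
    + intros i Hi. rewrite length_map in Hi. now apply StronglySorted_nth_lt.
    + intros t Ht. apply in_map_iff in Ht. destruct Ht as [x [<- Hx]]. now apply HinL.
    + intros t Ht Hsy. apply in_map_iff. destruct (Rle_dec c0 t).
      * destruct (Hcomp t ltac:(lra) Hsy) as [s Hs]. apply in_app_or in Hs.
        destruct Hs as [Hs|Hs]; [exists (t, s); split; auto; apply in_or_app; now right|].
        specialize (HB _ Hs). simpl in HB. lra.
      * destruct (Hcomp (t + T) ltac:(lra) (is_syzygy_shift t Hsy)) as [s Hs].
        apply in_app_or in Hs. destruct Hs as [Hs|Hs]; [specialize (HA _ Hs); simpl in HA; lra|].
        exists (t, s). split; [reflexivity|]. apply in_or_app; left. apply in_map_iff.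
        exists (t + T, s). split; [unfold sh; simpl; f_equal; ring|exact Hs].
    + intros i Hi. rewrite length_map in Hi.
      rewrite (nth_indep (map fst L') 0 (fst (0, 0%nat))) by (rewrite length_map; auto).
      rewrite (nth_indep (map snd L') 0%nat (snd (0, 0%nat))) by (rewrite length_map; auto).
      rewrite !map_nth. apply HinL, nth_In, Hi.
  - unfold L'. rewrite map_app, rotate_app, map_app, map_map. reflexivity.
Qed.

End Window.

Definition blocks (c0 D : R) (sym : nat -> nat) (zl : nat -> list (R * nat)) (N : nat) :=
  concat (map (fun j => (c0 + INR j * D, sym j) :: zl j) (seq 0 N)).

Lemma blocks_S c0 D sym zl N :
  blocks c0 D sym zl (S N) = blocks c0 D sym zl N ++ ((c0 + INR N * D, sym N) :: zl N).
Proof. unfold blocks. rewrite seq_S, map_app, concat_app. simpl. now rewrite app_nil_r. Qed.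

Lemma in_blocks c0 D sym zl N x : In x (blocks c0 D sym zl N) <->
  exists j, (j < N)%nat /\ (x = (c0 + INR j * D, sym j) \/ In x (zl j)).
Proof.
  unfold blocks. rewrite in_concat. split.
  - intros [l [Hl Hx]]. apply in_map_iff in Hl. destruct Hl as [j [<- Hj]]. apply in_seq in Hj.
    exists j. split; [lia|]. destruct Hx as [<-|Hx]; auto.
  - intros [j [Hj Hx]]. exists ((c0 + INR j * D, sym j) :: zl j). split.
    + apply in_map_iff. exists j. split; [reflexivity|]. apply in_seq. lia.
    + destruct Hx as [<-|Hx]; [left|right]; auto.
Qed.

Lemma map_snd_blocks c0 D sym zl N :
  map snd (blocks c0 D sym zl N) = concat (map (fun j => sym j :: map snd (zl j)) (seq 0 N)).
Proof. unfold blocks. now rewrite concat_map, map_map. Qed.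

Lemma blocks_sorted c0 D sym zl N : 0 < D ->
  (forall j, (j < N)%nat -> StronglySorted earlier (zl j) /\
     forall x, In x (zl j) -> c0 + INR j * D < fst x < c0 + INR (S j) * D) ->
  StronglySorted earlier (blocks c0 D sym zl N) /\
  (forall x, In x (blocks c0 D sym zl N) -> c0 <= fst x < c0 + INR N * D).
Proof.
  intros HD. induction N as [|N IH]; intros Hz; [split; [constructor|intros; contradiction]|].
  destruct IH as [IH1 IH2]; [intros j Hj; apply Hz; lia|].
  destruct (Hz N ltac:(lia)) as [Z1 Z2]. pose proof (pos_INR N).
  rewrite blocks_S. split.
  - apply StronglySorted_app; auto.
    + constructor; auto. apply Forall_forall. intros x Hx. specialize (Z2 x Hx).
      unfold earlier. simpl. lra.
    + intros x y Hx Hy. specialize (IH2 x Hx). unfold earlier.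
      destruct Hy as [<-|Hy]; simpl; [lra|]. specialize (Z2 y Hy). lra.
  - intros x Hx. rewrite S_INR in *. apply in_app_or in Hx. destruct Hx as [Hx|[<-|Hx]].
    + specialize (IH2 x Hx). nra.
    + simpl. nra.
    + specialize (Z2 x Hx). nra.
Qed.

Lemma lattice_index c0 D N t (j : Z) : 0 < D -> c0 <= t < c0 + INR N * D -> t = c0 + IZR j * D ->
  (0 <= j < Z.of_nat N)%Z.
Proof.
  intros HD Ht ->. rewrite INR_IZR_INZ in Ht.
  assert (0 <= IZR j) by (apply Rmult_le_reg_r with D; lra).
  assert (IZR j < IZR (Z.of_nat N)) by (apply Rmult_lt_reg_r with D; lra).
  apply le_IZR in H. apply lt_IZR in H0. lia.
Qed.

(* Block j consists of the crossing of nu = +-pi/2 at c0 + j D followed by the zeros of lambda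
   before the next crossing. *)
Lemma syzygy_word_of_blocks lam nu T c0 D N sym zl :
  0 < D -> T = INR N * D -> 0 <= c0 <= T ->
  (forall t, lam (t + T) = lam t /\ sin (nu (t + T)) = sin (nu t) /\ cos (nu (t + T)) = cos (nu t)) ->
  (forall t, cos (nu t) = 0 <-> exists j : Z, t = c0 + IZR j * D) ->
  collision_free lam nu ->
  (forall j, (j < N)%nat -> (sym j = 1%nat /\ sin (nu (c0 + INR j * D)) = -1) \/
                           (sym j = 2%nat /\ sin (nu (c0 + INR j * D)) = 1)) ->
  (forall j, (j < N)%nat -> StronglySorted earlier (zl j) /\
     forall x, In x (zl j) -> c0 + INR j * D < fst x < c0 + INR (S j) * D /\
                             snd x = 3%nat /\ lam (fst x) = 0) ->
  (forall t, c0 <= t < c0 + T -> lam t = 0 -> exists j, (j < N)%nat /\ In (t, 3%nat) (zl j)) ->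
  exists w k, syzygy_word lam nu T w /\
    rotate k w = concat (map (fun j => sym j :: map snd (zl j)) (seq 0 N)).
Proof.
  intros HD HTN Hc0 Hper Hcross Hcoll Hsym Hzl Hzc.
  destruct (blocks_sorted c0 D sym zl N HD) as [HS HR];
    [intros j Hj; split; [apply Hzl, Hj|intros x Hx; apply Hzl; auto]|].
  rewrite <- HTN in HR.
  destruct (syzygy_word_of_window lam nu T Hper c0 (blocks c0 D sym zl N) Hc0 HS HR)
    as [w [k [Hw Hrot]]].
  - intros t Ht Hsy. destruct (Classical_Prop.classic (cos (nu t) = 0)) as [Hc|Hc].
    + destruct (proj1 (Hcross t) Hc) as [j Hj].
      assert (Hjr := lattice_index c0 D N t j HD ltac:(rewrite <- HTN; exact Ht) Hj).
      exists (sym (Z.to_nat j)). apply in_blocks. exists (Z.to_nat j). split; [lia|left].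
      rewrite Hj, INR_IZR_INZ, Z2Nat.id by lia. reflexivity.
    + destruct Hsy as [Hl|Hl]; [|contradiction].
      destruct (Hzc t Ht Hl) as [j [Hj Hin]]. exists 3%nat. apply in_blocks. eauto.
  - intros x Hx. apply in_blocks in Hx. destruct Hx as [j [Hj [->|Hx]]]; simpl.
    + assert (Hc : cos (nu (c0 + INR j * D)) = 0) by
        (apply Hcross; exists (Z.of_nat j); now rewrite <- INR_IZR_INZ).
      assert (Hl : lam (c0 + INR j * D) <> 0) by (intro E; now apply (Hcoll (c0 + INR j * D))).
      unfold syz_symbol. destruct (Hsym j Hj) as [[A B]|[A B]]; right; [left|right]; auto.
    + destruct (proj2 (Hzl j Hj) x Hx) as [_ [-> Hl]].
      left. split; [reflexivity|split; [exact Hl|intro E; now apply (Hcoll (fst x))]].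
  - exists w, k. split; [exact Hw|]. now rewrite Hrot, map_snd_blocks.
Qed.

(* The zeros of lambda are c0 + (e + i) tau; block j is the time interval
   (c0 + j W tau, c0 + (j + 1) W tau), which contains the zeros with
   zfloor j < i <= zfloor (j + 1). *)
Definition zfloor (W e : R) (j : nat) : Z := Int_part (INR j * W - e).
Definition zcount (W e : R) (j : nat) : nat := Z.to_nat (zfloor W e (S j) - zfloor W e j).
Definition zeros_in_block (c0 tau W e : R) (j : nat) : list (R * nat) :=
  map (fun i => (c0 + (e + IZR (zfloor W e j + 1 + Z.of_nat i)) * tau, 3%nat))
      (seq 0 (zcount W e j)).

Section BlockZeros.
Variables (c0 tau W e : R).
Hypotheses (Htau : 0 < tau) (HW : 0 < W)
  (Hav : forall x y : Z, W * IZR x + - e <> IZR y).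

Lemma zfloor_strict j : IZR (zfloor W e j) < INR j * W - e < IZR (zfloor W e j) + 1.
Proof.
  unfold zfloor. destruct (base_Int_part (INR j * W - e)) as [[A|A] B]; [lra|exfalso].
  apply (Hav (Z.of_nat j) (Int_part (INR j * W - e))). rewrite <- INR_IZR_INZ. lra.
Qed.

Lemma zfloor_mono j : (zfloor W e j <= zfloor W e (S j))%Z.
Proof.
  destruct (zfloor_strict j) as [A B], (zfloor_strict (S j)) as [C E]. rewrite S_INR in *.
  assert (IZR (zfloor W e j) < IZR (zfloor W e (S j) + 1)) by (rewrite plus_IZR; nra).
  apply lt_IZR in H. lia.
Qed.

Lemma zeros_in_block_spec j : StronglySorted earlier (zeros_in_block c0 tau W e j) /\
  forall x, In x (zeros_in_block c0 tau W e j) ->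
    c0 + INR j * (W * tau) < fst x < c0 + INR (S j) * (W * tau) /\ snd x = 3%nat /\
    exists i : Z, fst x = c0 + (e + IZR i) * tau.
Proof.
  split.
  - apply StronglySorted_map_seq. intros i k Hik.
    apply Rplus_lt_compat_l, Rmult_lt_compat_r, Rplus_lt_compat_l, IZR_lt; [exact Htau|lia].
  - intros x Hx. unfold zeros_in_block in Hx. apply in_map_iff in Hx.
    destruct Hx as [i [<- Hi]]. apply in_seq in Hi. cbn [fst snd].
    split; [|split; [reflexivity|eexists; reflexivity]].
    destruct (zfloor_strict j) as [A B], (zfloor_strict (S j)) as [C E]. unfold zcount in Hi.
    assert (Hi' : (zfloor W e j + 1 + Z.of_nat i <= zfloor W e (S j))%Z) by lia.
    apply IZR_le in Hi'. rewrite !plus_IZR in *.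
    assert (0 <= IZR (Z.of_nat i)) by (apply IZR_le; lia).
    replace (INR j * (W * tau)) with ((INR j * W) * tau) by ring.
    replace (INR (S j) * (W * tau)) with ((INR (S j) * W) * tau) by ring.
    split; apply Rplus_lt_compat_l, Rmult_lt_compat_r; lra.
Qed.

Lemma zeros_in_block_complete j (i : Z) :
  INR j * (W * tau) <= (e + IZR i) * tau < INR (S j) * (W * tau) ->
  In (c0 + (e + IZR i) * tau, 3%nat) (zeros_in_block c0 tau W e j).
Proof.
  intros [H1 H2].
  assert (A1 : INR j * W <= e + IZR i) by (apply Rmult_le_reg_r with tau; lra).
  assert (A2 : e + IZR i < INR (S j) * W) by (apply Rmult_lt_reg_r with tau; lra).
  destruct (zfloor_strict j) as [B1 B2], (zfloor_strict (S j)) as [C1 C2].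
  assert (L1 : (zfloor W e j < i)%Z) by (apply lt_IZR; lra).
  assert (L2 : (i < zfloor W e (S j) + 1)%Z) by (apply lt_IZR; rewrite plus_IZR; lra).
  unfold zeros_in_block. apply in_map_iff. exists (Z.to_nat (i - zfloor W e j - 1)). split.
  - rewrite Z2Nat.id by lia. now replace (zfloor W e j + 1 + (i - zfloor W e j - 1))%Z with i by ring.
  - apply in_seq. unfold zcount. lia.
Qed.

Lemma map_snd_zeros_in_block j : map snd (zeros_in_block c0 tau W e j) = repeat 3%nat (zcount W e j).
Proof. unfold zeros_in_block. rewrite map_map. cbn [snd]. now rewrite map_const, length_seq. Qed.

Lemma length_block_words (sym : nat -> nat) N :
  Z.of_nat (length (concat (map (fun j => sym j :: repeat 3%nat (zcount W e j)) (seq 0 N)))) =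
  (Z.of_nat N + zfloor W e N - zfloor W e 0)%Z.
Proof.
  induction N as [|N IH]; [simpl; lia|].
  rewrite seq_S, map_app, concat_app, length_app. cbn [map concat]. rewrite app_nil_r.
  cbn [length]. rewrite repeat_length, Nat2Z.inj_add, IH, Nat2Z.inj_succ. unfold zcount.
  rewrite Nat.add_0_l, Z2Nat.id by (pose proof (zfloor_mono N); lia). rewrite Nat2Z.inj_succ. lia.
Qed.

Lemma zcount_sturmian i :
  let yprev := - e + INR i * W in
  (frac_part yprev + frac_part W < 1 /\ Z.of_nat (zcount W e i) = Int_part W) \/
  (frac_part yprev + frac_part W > 1 /\ Z.of_nat (zcount W e i) = (Int_part W + 1)%Z).
Proof.
  intros yprev.
  assert (E : Z.of_nat (zcount W e i) = (Int_part (yprev + W) - Int_part yprev)%Z).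
  { unfold zcount, zfloor. rewrite Z2Nat.id by (pose proof (zfloor_mono i); unfold zfloor in *; lia).
    unfold yprev. rewrite S_INR. f_equal; f_equal; ring. }
  rewrite E. destruct (Rlt_dec (frac_part yprev + frac_part W) 1) as [A|A].
  - left. split; [exact A|]. rewrite plus_Int_part2 by exact A. ring.
  - right. assert (frac_part yprev + frac_part W <> 1).
    { intro F. apply (Hav (Z.of_nat (S i)) (Int_part yprev + Int_part W + 1)).
      rewrite <- INR_IZR_INZ, !plus_IZR, S_INR.
      pose proof (Rplus_Int_part_frac_part yprev). pose proof (Rplus_Int_part_frac_part W).
      unfold yprev in *. simpl. lra. }
    split; [lra|]. rewrite plus_Int_part1 by lra. ring.
Qed.

End BlockZeros.

Lemma length_block_words_over_period (p q : nat) e (sym : nat -> nat) : (0 < p)%nat -> (0 < q)%nat ->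
  0 < e < 1 -> (forall x y : Z, INR p / INR q * IZR x + - e <> IZR y) ->
  length (concat (map (fun j => sym j :: repeat 3%nat (zcount (INR p / INR q) e j))
    (seq 0 (2 * q)))) = (2 * (p + q))%nat.
Proof.
  intros Hp Hq He Hav. assert (Hq' : 0 < INR q) by (apply lt_0_INR; lia).
  assert (HW : 0 < INR p / INR q) by (apply Rdiv_lt_0_compat; [apply lt_0_INR|]; assumption).
  apply Nat2Z.inj. rewrite length_block_words by assumption.
  assert (HFN : zfloor (INR p / INR q) e (2 * q) = (2 * Z.of_nat p - 1)%Z).
  { unfold zfloor. symmetry. apply Int_part_spec.
    rewrite mult_INR, minus_IZR, mult_IZR, <- INR_IZR_INZ. simpl IZR.
    replace (INR 2 * INR q * (INR p / INR q)) with (2 * INR p) by (simpl; field; lra). lra. }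
  assert (HF0 : zfloor (INR p / INR q) e 0 = (-1)%Z)
    by (unfold zfloor; symmetry; apply Int_part_spec; simpl; lra).
  rewrite HFN, HF0. lia.
Qed.

Lemma block_index D N u : 0 < D -> 0 <= u < INR N * D ->
  exists j, (j < N)%nat /\ INR j * D <= u < INR (S j) * D.
Proof.
  intros HD Hu. destruct (R_euclid_div D u HD) as [jz [r [Hr ->]]].
  assert (Hj : (0 <= jz < Z.of_nat N)%Z).
  { rewrite INR_IZR_INZ in Hu. split.
    - cut (-1 < jz)%Z; [lia|]. apply lt_IZR. simpl. nra.
    - apply lt_IZR. nra. }
  exists (Z.to_nat jz). split; [lia|]. rewrite S_INR, INR_IZR_INZ, Z2Nat.id by lia. nra.
Qed.

Lemma syzygy_word_with_lam_zeros lam nu T (p q : nat) c0 tau e (sym : nat -> nat) :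
  (0 < p)%nat -> (0 < q)%nat -> 0 < tau -> T = INR (2 * q) * (INR p / INR q * tau) ->
  0 <= c0 <= T -> 0 < e < 1 ->
  (forall t, lam (t + T) = lam t /\ sin (nu (t + T)) = sin (nu t) /\ cos (nu (t + T)) = cos (nu t)) ->
  (forall t, cos (nu t) = 0 <-> exists j : Z, t = c0 + IZR j * (INR p / INR q * tau)) ->
  (forall t, lam t = 0 <-> exists i : Z, t = c0 + (e + IZR i) * tau) ->
  collision_free lam nu ->
  (forall j, (j < 2 * q)%nat ->
     (sym j = 1%nat /\ sin (nu (c0 + INR j * (INR p / INR q * tau))) = -1) \/
     (sym j = 2%nat /\ sin (nu (c0 + INR j * (INR p / INR q * tau))) = 1)) ->
  exists w k ns, syzygy_word lam nu T w /\ length w = (2 * (p + q))%nat /\ length ns = (2 * q)%nat /\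
    rotate k w = concat (map (fun j => block (sym j) (nth j ns 0%nat)) (seq 0 (2 * q))) /\
    sturmian_exponents (INR p / INR q) ns.
Proof.
  intros Hp Hq Htau HT Hc0 He Hper Hcross Hzero Hcoll Hsym.
  assert (Hq' : 0 < INR q) by (apply lt_0_INR; lia).
  set (W := INR p / INR q) in *. set (N := (2 * q)%nat) in *.
  assert (HW : 0 < W) by (apply Rdiv_lt_0_compat; [apply lt_0_INR|]; assumption).
  assert (HD : 0 < W * tau) by (apply Rmult_lt_0_compat; assumption).
  assert (Hav : forall x y : Z, W * IZR x + - e <> IZR y).
  { intros x y E. apply (Hcoll (c0 + IZR x * (W * tau))). split.
    - apply Hzero. exists y. rewrite <- E. ring.
    - apply Hcross. now exists x. }
  destruct (syzygy_word_of_blocks lam nu T c0 (W * tau) N sym (zeros_in_block c0 tau W e)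
    HD HT Hc0 Hper Hcross Hcoll Hsym) as [w [k [Hw Hrot]]].
  - intros j _. destruct (zeros_in_block_spec c0 tau W e Htau Hav j) as [HS Hin].
    split; [exact HS|]. intros x Hx. destruct (Hin x Hx) as [A [B [i Hi]]].
    split; [exact A|split; [exact B|apply Hzero; now exists i]].
  - intros t Ht Hl. destruct (proj1 (Hzero t) Hl) as [i ->].
    destruct (block_index (W * tau) N ((e + IZR i) * tau) HD ltac:(rewrite <- HT; lra))
      as [j [Hj Hij]].
    exists j. split; [exact Hj|]. apply zeros_in_block_complete; assumption.
  - set (ns := map (zcount W e) (seq 0 N)).
    assert (Hns : forall j, (j < N)%nat -> nth j ns 0%nat = zcount W e j).
    { intros j Hj. unfold ns. rewrite (nth_indep _ 0%nat (zcount W e 0)) by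
        (rewrite length_map, length_seq; lia). rewrite map_nth, seq_nth by lia. reflexivity. }
    assert (Hword : concat (map (fun j => sym j :: map snd (zeros_in_block c0 tau W e j)) (seq 0 N))
      = concat (map (fun j => block (sym j) (nth j ns 0%nat)) (seq 0 N))).
    { f_equal. apply map_ext_in. intros j Hj. apply in_seq in Hj.
      unfold block. rewrite map_snd_zeros_in_block, Hns by lia. reflexivity. }
    exists w, k, ns. split; [exact Hw|split; [|split; [|split]]].
    + rewrite <- (length_rotate k w), Hrot.
      erewrite map_ext; [|intro j; rewrite map_snd_zeros_in_block; reflexivity].
      apply length_block_words_over_period; assumption.
    + unfold ns. now rewrite length_map, length_seq.
    + now rewrite Hrot, Hword.
    + exists (- e). split; [exact Hav|]. intros i Hi. unfold ns in Hi.
      rewrite length_map, length_seq in Hi. rewrite Hns by exact Hi.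
      exact (zcount_sturmian W e HW Hav i).
Qed.

Lemma Z_even_of_nat n : Z.even (Z.of_nat n) = Nat.even n.
Proof.
  induction n as [|n IH]; [reflexivity|].
  rewrite Nat2Z.inj_succ, Z.even_succ, Nat.even_succ, <- Z.negb_even, <- Nat.negb_even, IH.
  reflexivity.
Qed.

Lemma P_word_parity q :
  concat (map (fun j => (if Nat.even j then 1 else 2)%nat :: nil) (seq 0 (2 * q))) = P_word q.
Proof.
  enough (H : forall a, Nat.even a = true ->
    concat (map (fun j => (if Nat.even j then 1 else 2)%nat :: nil) (seq a (2 * q))) = P_word q)
    by (apply H; reflexivity).
  induction q as [|q IH]; intros a Ha; [reflexivity|].
  replace (2 * S q)%nat with (S (S (2 * q))) by lia.
  cbn [seq map concat app]. rewrite Ha, Nat.even_succ, <- Nat.negb_even, Ha.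
  unfold P_word. cbn [repeat concat app]. do 2 f_equal. apply IH. now rewrite Nat.even_succ_succ.
Qed.

Lemma Zmult_shift_eq (F : Z -> R) m : (forall j, F (j + m)%Z = F j) ->
  forall n j, F (j + n * m)%Z = F j.
Proof.
  intros HF n. induction n using Z.peano_ind; intro j.
  - now rewrite Z.add_0_r.
  - replace (j + Z.succ n * m)%Z with (j + n * m + m)%Z by (unfold Z.succ; ring). now rewrite HF.
  - rewrite <- (HF (j + Z.pred n * m)%Z), <- (IHn j). f_equal. unfold Z.pred. ring.
Qed.

Lemma lattice_rebase (f : R -> R) (F : Z -> R) c D (m : Z) : 0 < D -> (0 < m)%Z ->
  (forall j, F (j + m)%Z = F j) -> (forall j, f (c + IZR j * D) = F j) ->
  exists c0, 0 <= c0 < IZR m * D /\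
    (forall t, (exists j : Z, t = c + IZR j * D) <-> exists j : Z, t = c0 + IZR j * D) /\
    (forall j, f (c0 + IZR j * D) = F j).
Proof.
  intros HD Hm HF Hf. assert (0 < IZR m) by (apply IZR_lt; exact Hm).
  destruct (R_euclid_div (IZR m * D) c ltac:(nra)) as [n [r [Hr ->]]].
  exists r. split; [exact Hr|split].
  - intro t. split; intros [j ->].
    + exists (j + n * m)%Z. rewrite plus_IZR, mult_IZR. ring.
    + exists (j - n * m)%Z. rewrite minus_IZR, mult_IZR. ring.
  - intro j. replace (F j) with (F (j - n * m)%Z)
      by (rewrite <- (Zmult_shift_eq F m HF n (j - n * m)); f_equal; ring).
    rewrite <- Hf. f_equal. rewrite minus_IZR, mult_IZR. ring.
Qed.

Lemma lattice_offset (f : R -> R) t1 tau c0 : 0 < tau ->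
  (forall t, f t = 0 <-> exists j : Z, t = t1 + IZR j * tau) -> f c0 <> 0 ->
  exists e, 0 < e < 1 /\ forall t, f t = 0 <-> exists i : Z, t = c0 + (e + IZR i) * tau.
Proof.
  intros Ht Hz Hc. destruct (R_euclid_div 1 ((t1 - c0) / tau) ltac:(lra)) as [i0 [e [He E]]].
  assert (Et1 : t1 = c0 + (e + IZR i0) * tau) by (rewrite Rmult_1_r in E; rewrite <- E; field; lra).
  assert (He0 : e <> 0).
  { intro E0. apply Hc, Hz. exists (- i0)%Z. rewrite Et1, E0, opp_IZR. ring. }
  exists e. split; [lra|]. intro t. rewrite Hz. split; intros [j ->].
  - exists (i0 + j)%Z. rewrite Et1, plus_IZR. ring.
  - exists (j - i0)%Z. rewrite Et1, minus_IZR. ring.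
Qed.

(** * The three types of tori *)

Section Torus.
Variables d m1 m2 h g : R.
Hypotheses (Hd : 0 < d) (Hm1 : 0 < m1) (Hm2 : 0 < m2) (Hh : h < 0).
Variables lam plam nu pnu : R -> R.
Hypotheses (Hsol : is_reg_solution d m1 m2 h lam plam nu pnu)
  (Hlev_lam : forall tau, H_lam d m1 m2 h (lam tau) (plam tau) = - g)
  (Hlev_nu : forall tau, H_nu d m1 m2 h (nu tau) (pnu tau) = g)
  (Hreg_lam : regular_value (H_lam d m1 m2 h) (dH_lam d m1 m2 h) (- g))
  (Hreg_nu : regular_value (H_nu d m1 m2 h) (dH_nu d m1 m2 h) g)
  (Hnocoll : collision_free lam nu).
Variables T Tlam Tnu : R.
Hypotheses (HT : min_period (state_per lam plam nu pnu) T)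
  (HTlam : min_period (lam_per lam plam) Tlam) (HTnu : min_period (nu_per nu pnu) Tnu).
Variables p q : nat.
Hypotheses (Hp : (0 < p)%nat) (Hq : (0 < q)%nat) (Hpq : Nat.gcd p q = 1%nat)
  (HW : Tnu / Tlam = INR p / INR q).

Lemma lam_solves : solves_lam d m1 m2 h lam plam.
Proof. intro t. destruct (Hsol t) as [A [B _]]. now split. Qed.

Lemma nu_solves : solves_nu d m1 m2 h nu pnu.
Proof. intro t. destruct (Hsol t) as [_ [_ [C E]]]. now split. Qed.

Lemma syzygy_data_periodic : forall t,
  lam (t + T) = lam t /\ sin (nu (t + T)) = sin (nu t) /\ cos (nu (t + T)) = cos (nu t).
Proof.
  intro t. destruct (proj1 (proj2 HT) t) as [A [_ [C _]]].
  split; [exact A|split; [apply eqmod2pi_sin|apply eqmod2pi_cos]; exact C].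
Qed.

Lemma crossing_spacing D : Tnu = 2 * D ->
  D = INR p / INR q * (Tlam / 2) /\ T = INR (2 * q) * D.
Proof.
  intros HD. destruct (period_relation lam plam nu pnu T Tlam Tnu p q HT HTlam HTnu Hp Hq Hpq HW)
    as [HTq _].
  pose proof (proj1 HTlam). assert (0 < INR q) by (apply lt_0_INR; lia).
  assert (Tnu = INR p / INR q * Tlam) by (rewrite <- HW; field; lra).
  split; [lra|]. rewrite HTq, HD, mult_INR. simpl. ring.
Qed.

Lemma alternating_symbols c0 D :
  (forall j : Z, sin (nu (c0 + IZR j * D)) = if Z.even j then -1 else 1) ->
  forall j, ((if Nat.even j then 1 else 2)%nat = 1%nat /\ sin (nu (c0 + INR j * D)) = -1) \/
            ((if Nat.even j then 1 else 2)%nat = 2%nat /\ sin (nu (c0 + INR j * D)) = 1).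
Proof.
  intros Hs j. rewrite INR_IZR_INZ, Hs, Z_even_of_nat. destruct (Nat.even j); auto.
Qed.

Lemma syzygy_word_with_crossings c0 D (sym : nat -> nat) : Tnu = 2 * D -> 0 <= c0 < 2 * D ->
  (forall t, cos (nu t) = 0 <-> exists j : Z, t = c0 + IZR j * D) -> (exists t1, lam t1 = 0) ->
  (forall j, (sym j = 1%nat /\ sin (nu (c0 + INR j * D)) = -1) \/
             (sym j = 2%nat /\ sin (nu (c0 + INR j * D)) = 1)) ->
  exists w, syzygy_word lam nu T w /\ length w = (2 * (p + q))%nat /\
    exists k ns, length ns = (2 * q)%nat /\
      rotate k w = concat (map (fun j => block (sym j) (nth j ns 0%nat)) (seq 0 (2 * q))) /\
      sturmian_exponents (Tnu / Tlam) ns.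
Proof.
  intros HTn Hc0 Hcross [t1 Ht1] Hsym.
  destruct (crossing_spacing D HTn) as [HD HTD].
  pose proof (proj1 HTlam). assert (1 <= INR q) by (apply (le_INR 1); lia).
  assert (Hlc0 : lam c0 <> 0) by
    (intro E; apply (Hnocoll c0); split; [exact E|apply Hcross; exists 0%Z; ring]).
  destruct (lattice_offset lam t1 (Tlam / 2) c0 ltac:(lra)
    (lam_zero_set d m1 m2 h g Hd Hh lam plam lam_solves Hlev_lam Hreg_lam Tlam t1 HTlam Ht1) Hlc0)
    as [e [He Hz]].
  rewrite HD in Hcross, Hsym, HTD.
  destruct (syzygy_word_with_lam_zeros lam nu T p q c0 (Tlam / 2) e sym Hp Hq ltac:(lra) HTD
    ltac:(rewrite HTD, mult_INR; simpl; nra) He syzygy_data_periodic Hcross Hz Hnocoll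
    (fun j _ => Hsym j)) as [w [k [ns [Hw [Hlw [Hlns [Hrot Hst]]]]]]].
  exists w. split; [exact Hw|split; [exact Hlw|]]. exists k, ns. rewrite HW. auto.
Qed.

Lemma syzygy_word_type_L : type_L lam nu Tnu ->
  exists w, syzygy_word lam nu T w /\ length w = (2 * (p + q))%nat /\
    exists k ns, rotate k w = L_word ns /\ sturmian_exponents (Tnu / Tlam) ns.
Proof.
  intros [Hrot Hz].
  destruct (nu_rotation_crossings d m1 m2 h Hd Hh nu pnu nu_solves Tnu HTnu Hrot)
    as [c [D [HD [HTn [Hcr Hsin]]]]].
  destruct (lattice_rebase (fun t => sin (nu t)) (fun j => if Z.even j then -1 else 1) c D 2 HD
    ltac:(lia) ltac:(intro j; cbv beta; now rewrite Z.even_add_even by (exists 1%Z; ring)) Hsin)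
    as [c0 [Hc0 [Hlat Hs0]]].
  destruct (syzygy_word_with_crossings c0 D (fun j => if Nat.even j then 1 else 2)%nat HTn
    ltac:(simpl in Hc0; lra) (fun t => iff_trans (Hcr t) (Hlat t)) Hz
    (alternating_symbols c0 D Hs0)) as [w [Hw [Hlw [k [ns [Hlns [Hrw Hst]]]]]]].
  exists w. split; [exact Hw|split; [exact Hlw|]]. exists k, ns.
  unfold L_word. now rewrite Hlns.
Qed.

Lemma syzygy_word_type_S : type_S nu Tnu ->
  exists w, syzygy_word lam nu T w /\ length w = (2 * (p + q))%nat /\
    exists k ns, (rotate k w = S_word 1 ns \/ rotate k w = S_word 2 ns) /\
      sturmian_exponents (Tnu / Tlam) ns.
Proof.
  intros Hclosed.
  destruct (nu_oscillation_crossings d m1 m2 h g Hd Hh nu pnu nu_solves Tnu HTnu Hclosed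
    Hlev_nu Hreg_nu) as [c [D [a [HD [HTn [Ha [Hcr Hva]]]]]]].
  assert (Hz : exists t1, lam t1 = 0).
  { apply (lam_has_zero d m1 m2 h g Hd Hh lam plam lam_solves Hlev_lam Hreg_lam Tlam HTlam).
    apply (lam_level_above_origin d m1 m2 h g Hd Hm1 Hm2 Hh lam plam Hlev_lam Hreg_lam).
    exact (nu_periodic_has_turning_point d m1 m2 h g nu pnu nu_solves Tnu (proj1 HTnu)
      (nu_periodic_of_closed d m1 m2 h nu pnu nu_solves Tnu (proj1 (proj2 HTnu)) Hclosed)
      Hlev_nu). }
  destruct (lattice_rebase nu (fun _ => a) c D 1 HD ltac:(lia) (fun _ => eq_refl) Hva)
    as [c0 [Hc0 [Hlat Hs0]]].
  assert (Hsa : sin a = -1 \/ sin a = 1).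
  { pose proof (sin2 a) as E. unfold Rsqr in E. rewrite Ha in E.
    assert (E' : (sin a + 1) * (sin a - 1) = 0) by lra.
    apply Rmult_integral in E'. destruct E'; [left|right]; lra. }
  set (sy := if Req_EM_T (sin a) (-1) then 1%nat else 2%nat).
  destruct (syzygy_word_with_crossings c0 D (fun _ => sy) HTn ltac:(simpl in Hc0; lra)
    (fun t => iff_trans (Hcr t) (Hlat t)) Hz) as [w [Hw [Hlw [k [ns [Hlns [Hrw Hst]]]]]]].
  { intro j. rewrite INR_IZR_INZ, Hs0. unfold sy.
    destruct (Req_EM_T (sin a) (-1)); [left|right]; split; auto; destruct Hsa; [contradiction|auto]. }
  exists w. split; [exact Hw|split; [exact Hlw|]]. exists k, ns. split; [|exact Hst].
  rewrite <- Hlns, <- (map_as_nth_seq (block sy) ns 0%nat) in Hrw.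
  unfold S_word, sy in *. destruct (Req_EM_T (sin a) (-1)); [left|right]; exact Hrw.
Qed.

Lemma syzygy_word_type_P : type_P lam nu Tnu ->
  exists w, syzygy_word lam nu T w /\ exists k, rotate k w = P_word q.
Proof.
  intros [Hrot Hnz].
  destruct (nu_rotation_crossings d m1 m2 h Hd Hh nu pnu nu_solves Tnu HTnu Hrot)
    as [c [D [HD [HTn [Hcr Hsin]]]]].
  destruct (lattice_rebase (fun t => sin (nu t)) (fun j => if Z.even j then -1 else 1) c D 2 HD
    ltac:(lia) ltac:(intro j; cbv beta; now rewrite Z.even_add_even by (exists 1%Z; ring)) Hsin)
    as [c0 [Hc0 [Hlat Hs0]]].
  destruct (crossing_spacing D HTn) as [_ HTD].
  assert (1 <= INR q) by (apply (le_INR 1); lia).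
  destruct (syzygy_word_of_blocks lam nu T c0 D (2 * q) (fun j => if Nat.even j then 1 else 2)%nat
    (fun _ => nil) HD HTD ltac:(rewrite HTD, mult_INR; simpl in *; nra) syzygy_data_periodic
    (fun t => iff_trans (Hcr t) (Hlat t)) Hnocoll (fun j _ => alternating_symbols c0 D Hs0 j))
    as [w [k [Hw Hrw]]].
  - intros j _. split; [constructor|intros; contradiction].
  - intros t _ E. contradiction (Hnz t E).
  - exists w. split; [exact Hw|]. exists k. rewrite Hrw. apply P_word_parity.
Qed.

End Torus.

Theorem theorem1
  (d m1 m2 h g : R) (Hd : 0 < d) (Hm1 : 0 < m1) (Hm2 : 0 < m2) (Hh : h < 0)
  (lam plam nu pnu : R -> R)
  (Hsol : is_reg_solution d m1 m2 h lam plam nu pnu)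
  (Hlev_lam : forall tau, H_lam d m1 m2 h (lam tau) (plam tau) = - g)
  (Hlev_nu : forall tau, H_nu d m1 m2 h (nu tau) (pnu tau) = g)
  (Hreg_lam : regular_value (H_lam d m1 m2 h) (dH_lam d m1 m2 h) (- g))
  (Hreg_nu : regular_value (H_nu d m1 m2 h) (dH_nu d m1 m2 h) g)
  (Hnocoll : collision_free lam nu)
  (T : R) (HT : min_period (state_per lam plam nu pnu) T)
  (Tlam Tnu : R)
  (HTlam : min_period (lam_per lam plam) Tlam)
  (HTnu : min_period (nu_per nu pnu) Tnu)
  (p q : nat) (Hp : (0 < p)%nat) (Hq : (0 < q)%nat) (Hpq : Nat.gcd p q = 1%nat)
  (HW : Tnu / Tlam = INR p / INR q) :
  (type_L lam nu Tnu ->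
     exists w, syzygy_word lam nu T w /\ length w = (2 * (p + q))%nat /\
       exists k ns, rotate k w = L_word ns /\ sturmian_exponents (Tnu / Tlam) ns) /\
  (type_S nu Tnu ->
     exists w, syzygy_word lam nu T w /\ length w = (2 * (p + q))%nat /\
       exists k ns, (rotate k w = S_word 1 ns \/ rotate k w = S_word 2 ns) /\
                    sturmian_exponents (Tnu / Tlam) ns) /\
  (type_P lam nu Tnu ->
     exists w, syzygy_word lam nu T w /\ exists k, rotate k w = P_word q).
Proof.
  split; [|split].
  - exact (syzygy_word_type_L d m1 m2 h g Hd Hh lam plam nu pnu Hsol Hlev_lam Hreg_lam Hnocoll
      T Tlam Tnu HT HTlam HTnu p q Hp Hq Hpq HW).
  - exact (syzygy_word_type_S d m1 m2 h g Hd Hm1 Hm2 Hh lam plam nu pnu Hsol Hlev_lam Hlev_nu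
      Hreg_lam Hreg_nu Hnocoll T Tlam Tnu HT HTlam HTnu p q Hp Hq Hpq HW).
  - exact (syzygy_word_type_P d m1 m2 h Hd Hh lam plam nu pnu Hsol Hnocoll
      T Tlam Tnu HT HTlam HTnu p q Hp Hq Hpq HW).
Qed.
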